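(* There is a sequence of embeddings $\mathcal{K}_1 \hookrightarrow \mathcal{K}_2^{\mathrm{eff}} \hookrightarrow \mathcal{B}^{\mathrm{eff}} \hookrightarrow \mathcal{E}$.
   Context: A pca is a set with a partial binary application operation containing distinct $\mathrm{s},\mathrm{k}$ with $\mathrm{k}ab\downarrow=a$, $\mathrm{s}ab\downarrow$, $\mathrm{s}abc\simeq(ac)(bc)$. An embedding of pcas is an injective map $f$ with: if $ab$ is defined then $f(a)f(b)$ is defined and equals $f(ab)$. $\mathcal{K}_1$: $\omega$ with $n\cdot m=\varphi_n(m)$. For partial functions $\varphi,\psi:\omega\rightharpoonup\omega$ let $\varphi\cdot\psi$ be the partial function $n\mapsto\Phi^{\varphi\oplus\psi}_{\varphi(0)}(n)$, where $\Phi_e$ is the $e$-th Turing functional, $(\varphi\oplus\psi)(2n)\simeq\varphi(n)$, $(\varphi\oplus\psi)(2n+1)\simeq\psi(n)$, and querying the oracle at an undefined point diverges. $\mathcal{K}_2^{\mathrm{eff}}$: total computable functions with this application, defined iff the result is total. $\mathcal{B}^{\mathrm{eff}}$: partial computable functions with this application. $\mathcal{E}$: the c.e. subsets of $\omega$ with application $A\cdot B=\{n:\exists u\,(\langle n,u\rangle\in A\wedge D_u\subseteq B)\}$, where $\langle\cdot,\cdot\rangle$ is a bijective computable pairing with $\langle 0,0\rangle=0$ and $D_u$ is the finite set with canonical code $u$. *)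

(* Partial functions omega -> omega are [nat -> option nat]. *)
From Stdlib Require Import Arith List.
Import ListNotations.

Definition cpair (x y : nat) : nat := (x + y) * (x + y + 1) / 2 + y.

(** Canonical finite sets: D_u = { i | bit i of u is 1 }. *)
Definition inD (i u : nat) : Prop := Nat.testbit u i = true.

Inductive code : Type :=
| CZero
| CSucc
| CProj (i : nat)
| CComp (f : code) (gs : list code)
| CRec (f g : code)
| CMu (f : code)
| COrc.

Inductive eval (O : nat -> option nat) : code -> list nat -> nat -> Prop :=
| eZero v : eval O CZero v 0
| eSucc v : eval O CSucc v (S (nth 0 v 0))
| eProj i v : eval O (CProj i) v (nth i v 0)
| eComp f gs v ws y :
    evals O gs v ws -> eval O f ws y -> eval O (CComp f gs) v y
| eRec0 f g v y : eval O f v y -> eval O (CRec f g) (0 :: v) y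
| eRecS f g k v z y :
    eval O (CRec f g) (k :: v) z -> eval O g (k :: z :: v) y ->
    eval O (CRec f g) (S k :: v) y
| eMu f v k :
    eval O f (k :: v) 0 ->
    (forall j, j < k -> exists z, z <> 0 /\ eval O f (j :: v) z) ->
    eval O (CMu f) v k
| eOrc v y : O (nth 0 v 0) = Some y -> eval O COrc v y
with evals (O : nat -> option nat) : list code -> list nat -> list nat -> Prop :=
| esNil v : evals O [] v []
| esCons g gs v w ws : eval O g v w -> evals O gs v ws -> evals O (g :: gs) v (w :: ws).

Fixpoint encode (c : code) : nat :=
  match c with
  | CZero => cpair 0 0
  | CSucc => cpair 1 0
  | CProj i => cpair 2 i
  | CComp f gs =>
      cpair 3 (cpair (encode f)
        ((fix el (l : list code) : nat :=
            match l with [] => 0 | g :: l' => S (cpair (encode g) (el l')) end) gs))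
  | CRec f g => cpair 4 (cpair (encode f) (encode g))
  | CMu f => cpair 5 (encode f)
  | COrc => cpair 6 0
  end.

(** [Phi e O n y] : Phi^O_e(n) converges with value y  (the e-th Turing functional;
    indices that code no program give the nowhere-defined functional). *)
Definition Phi (e : nat) (O : nat -> option nat) (n y : nat) : Prop :=
  exists c, encode c = e /\ eval O c [n] y.

Definition empty_oracle : nat -> option nat := fun _ => None.
Definition phi (e n y : nat) : Prop := Phi e empty_oracle n y.

Definition join (f g : nat -> option nat) : nat -> option nat :=
  fun x => if Nat.odd x then g (Nat.div2 x) else f (Nat.div2 x).

(** [Bapp f g n y] : (f . g)(n) converges to y, i.e. Phi^{f (+) g}_{f(0)}(n) = y
    (diverges when f(0) is undefined). *)
Definition Bapp (f g : nat -> option nat) (n y : nat) : Prop :=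
  exists e, f 0 = Some e /\ Phi e (join f g) n y.

Definition K1 : Type := nat.
Definition K1_app (a b c : K1) : Prop := phi a b c.

Definition total_computable (f : nat -> nat) : Prop :=
  exists e, forall n, phi e n (f n).
Definition K2eff : Type := { f : nat -> nat | total_computable f }.
Definition K2eff_app (a b c : K2eff) : Prop :=
  forall n, Bapp (fun x => Some (proj1_sig a x)) (fun x => Some (proj1_sig b x))
                 n (proj1_sig c n).

Definition partial_computable (f : nat -> option nat) : Prop :=
  exists e, forall n y, f n = Some y <-> phi e n y.
Definition Beff : Type := { f : nat -> option nat | partial_computable f }.
Definition Beff_app (a b c : Beff) : Prop :=
  forall n y, proj1_sig c n = Some y <-> Bapp (proj1_sig a) (proj1_sig b) n y.

Definition ce (A : nat -> Prop) : Prop :=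
  exists e, forall n, A n <-> exists y, phi e n y.
Definition Ecarrier : Type := { A : nat -> Prop | ce A }.
Definition E_app (a b c : Ecarrier) : Prop :=
  forall n, proj1_sig c n <->
    exists u, proj1_sig a (cpair n u) /\ (forall i, inD i u -> proj1_sig b i).

Definition embedding {A B : Type} (appA : A -> A -> A -> Prop)
    (appB : B -> B -> B -> Prop) (f : A -> B) : Prop :=
  (forall a a', f a = f a' -> a = a') /\
  (forall a b c, appA a b c -> appB (f a) (f b) (f c)).

From Stdlib Require Import Arith Lia List PeanoNat.
From Stdlib Require Import Classical ClassicalEpsilon FunctionalExtensionality ProofIrrelevance.
Import ListNotations.

(* [K_1 -> K_2^eff] sends [a] to a total computable [f_a] with [f_a 1 = a], [f_a 2] the
   index of the program computing every [f_c], and [f_a 0] the index of a program that on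
   the oracle [f_a (+) f_b] reads [b], computes [c = phi_a(b)] and then behaves as [f_c].
   [K_2^eff -> B^eff] is the inclusion.  [B^eff -> E] sends [a] to the set containing the
   graph points [<<x, y>, 1>] of [a] and the pairs [<m, u>], [u] an even code of a finite
   function, with [m] in the image of [a . u].  A convergent computation of [a . b] consults
   only finitely many values of [b], so [a . b] corresponds exactly to the application of
   enumeration operators.  The image is c.e. because membership is witnessed by a finite
   certificate (a derivation of the computations involved) that a primitive recursive
   predicate can check. *)

(** * Cantor pairing and Goedel numbers *)

Arguments cpair : simpl never.

Definition tri (s : nat) : nat := s * (s + 1) / 2.

Lemma tri_S s : tri (S s) = tri s + S s.
Proof.
  unfold tri. replace (S s * (S s + 1)) with (s * (s + 1) + S s * 2) by lia.
  rewrite Nat.div_add by lia. lia.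
Qed.

Lemma tri_mono s t : s <= t -> tri s <= tri t.
Proof. induction 1; auto. rewrite tri_S. lia. Qed.

Lemma tri_ge s : s <= tri s.
Proof. induction s; [cbv; lia | rewrite tri_S; lia]. Qed.

Lemma cpair_tri x y : cpair x y = tri (x + y) + y.
Proof. reflexivity. Qed.

Lemma cpair_tri_bounds x y : tri (x + y) <= cpair x y < tri (S (x + y)).
Proof. rewrite cpair_tri, tri_S. lia. Qed.

Lemma tri_interval_unique s t z :
  tri s <= z < tri (S s) -> tri t <= z < tri (S t) -> s = t.
Proof.
  intros [H1 H2] [H3 H4].
  destruct (lt_eq_lt_dec s t) as [[H|H]|H]; auto.
  - assert (tri (S s) <= tri t) by (apply tri_mono; lia). lia.
  - assert (tri (S t) <= tri s) by (apply tri_mono; lia). lia.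
Qed.

Lemma cpair_inj x y x' y' : cpair x y = cpair x' y' -> x = x' /\ y = y'.
Proof.
  intro E.
  assert (Hs : x + y = x' + y').
  { eapply tri_interval_unique; [apply cpair_tri_bounds | rewrite E; apply cpair_tri_bounds]. }
  rewrite !cpair_tri, Hs in E. lia.
Qed.

Lemma cpair_surj z : exists x y, cpair x y = z.
Proof.
  assert (Hs : exists s, tri s <= z < tri (S s)).
  { induction z as [|z [s Hs]].
    - exists 0. cbv. lia.
    - destruct (Nat.eq_dec (S z) (tri (S s))).
      + exists (S s). rewrite (tri_S (S s)). lia.
      + exists s. lia. }
  destruct Hs as [s [H1 H2]]. rewrite tri_S in H2.
  exists (s - (z - tri s)), (z - tri s). rewrite cpair_tri.
  replace (s - (z - tri s) + (z - tri s)) with s by lia. lia.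
Qed.

Lemma cpair_ge_l x y : x <= cpair x y.
Proof. rewrite cpair_tri. pose proof (tri_ge (x + y)). lia. Qed.

Lemma cpair_ge_r x y : y <= cpair x y.
Proof. rewrite cpair_tri. lia. Qed.

Lemma cpair_eq0 x y : cpair x y = 0 -> x = 0 /\ y = 0.
Proof. intro H. apply cpair_inj. rewrite H. reflexivity. Qed.

Fixpoint lcode (l : list nat) : nat :=
  match l with [] => 0 | x :: l' => S (cpair x (lcode l')) end.

Lemma lcode_surj v : exists l, lcode l = v.
Proof.
  induction v as [[|v] IH] using (well_founded_induction lt_wf); [now exists []|].
  destruct (cpair_surj v) as [x [w <-]].
  destruct (IH w) as [l <-]; [pose proof (cpair_ge_r x w); lia|].
  now exists (x :: l).
Qed.

Lemma lcode_ge_length l : length l <= lcode l.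
Proof. induction l as [|x l IH]; simpl; auto. pose proof (cpair_ge_r x (lcode l)). lia. Qed.

Fixpoint encode_list (l : list code) : nat :=
  match l with [] => 0 | g :: l' => S (cpair (encode g) (encode_list l')) end.

Lemma encode_CComp f gs : encode (CComp f gs) = cpair 3 (cpair (encode f) (encode_list gs)).
Proof. reflexivity. Qed.

Fixpoint code_size (c : code) : nat :=
  match c with
  | CComp f gs => S (code_size f + list_sum (map code_size gs) + length gs)
  | CRec f g => S (code_size f + code_size g)
  | CMu f => S (code_size f)
  | _ => 0
  end.

Lemma encode_inj_size n :
  forall c c', code_size c + code_size c' <= n -> encode c = encode c' -> c = c'.
Proof.
  induction n as [|n IH]; intros c c' Hs He;
    destruct c, c'; simpl in He; try rewrite !encode_CComp in He;
    apply cpair_inj in He as [Ht Hd]; try discriminate; try (subst; reflexivity);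
    simpl in Hs; try lia.
  - apply cpair_inj in Hd as [Hf Hgs]. f_equal; [apply IH; auto; lia|].
    assert (Hl : list_sum (map code_size gs) + length gs
                 + (list_sum (map code_size gs0) + length gs0) <= n) by lia.
    clear -IH Hl Hgs. revert gs0 Hl Hgs.
    induction gs as [|g gs IHgs]; intros [|g' gs'] Hl Hgs; simpl in *; try discriminate; auto.
    injection Hgs as Hgs. apply cpair_inj in Hgs as [Hg Hgs].
    f_equal; [apply IH; auto; lia | apply IHgs; auto; lia].
  - apply cpair_inj in Hd as [Hf Hg]. f_equal; apply IH; auto; lia.
  - f_equal. apply IH; auto; lia.
Qed.

Lemma encode_inj c c' : encode c = encode c' -> c = c'.
Proof. intro; eapply encode_inj_size; eauto. Qed.

Lemma encode_CRec_inv C f g :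
  encode C = cpair 4 (cpair f g) -> exists F G, C = CRec F G /\ encode F = f /\ encode G = g.
Proof.
  intros H. destruct C; simpl in H; try rewrite encode_CComp in H;
    apply cpair_inj in H as [H1 H2]; try discriminate.
  apply cpair_inj in H2 as [H2 H3]. eauto.
Qed.

(** * Evaluation: determinism, monotonicity and finite use *)

Fixpoint eval_functional O c v y (H : eval O c v y) {struct H} :
  forall y', eval O c v y' -> y = y'
with evals_functional O gs v ws (H : evals O gs v ws) {struct H} :
  forall ws', evals O gs v ws' -> ws = ws'.
Proof.
  - destruct H; intros y' H'; inversion H'; subst; auto.
    + pose proof (evals_functional _ _ _ _ H _ H3). subst.
      exact (eval_functional _ _ _ _ H0 _ H6).
    + exact (eval_functional _ _ _ _ H _ H4).
    + pose proof (eval_functional _ _ _ _ H _ H6). subst.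
      exact (eval_functional _ _ _ _ H0 _ H7).
    + destruct (lt_eq_lt_dec k y') as [[Hl|Hl]|Hl]; auto; exfalso.
      * destruct (H3 k Hl) as [z [Hz Hz']]. apply Hz. symmetry.
        exact (eval_functional _ _ _ _ H _ Hz').
      * destruct (H0 y' Hl) as [z [Hz Hz']]. apply Hz.
        exact (eval_functional _ _ _ _ Hz' _ H2).
    + congruence.
  - destruct H; intros ws' H'; inversion H'; subst; auto.
    f_equal; [exact (eval_functional _ _ _ _ H _ H3) | exact (evals_functional _ _ _ _ H0 _ H6)].
Qed.

Lemma Phi_functional e O n y y' : Phi e O n y -> Phi e O n y' -> y = y'.
Proof.
  intros [c [<- H]] [c' [Hc' H']]. apply encode_inj in Hc' as ->.
  eapply eval_functional; eauto.
Qed.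

Lemma Bapp_functional f g n y y' : Bapp f g n y -> Bapp f g n y' -> y = y'.
Proof.
  intros [e [He H]] [e' [He' H']]. rewrite He in He'. injection He' as <-.
  eapply Phi_functional; eauto.
Qed.

Definition oracle_le (O O' : nat -> option nat) : Prop :=
  forall q a, O q = Some a -> O' q = Some a.

Lemma oracle_le_empty O : oracle_le empty_oracle O.
Proof. discriminate. Qed.

Fixpoint eval_oracle_le O O' (HO : oracle_le O O') c v y (H : eval O c v y) {struct H} :
  eval O' c v y
with evals_oracle_le O O' (HO : oracle_le O O') gs v ws (H : evals O gs v ws) {struct H} :
  evals O' gs v ws.
Proof.
  - destruct H; econstructor; eauto.
    intros j Hj. destruct (H0 j Hj) as [z [Hz Hz']]. eauto.
  - destruct H; constructor; eauto.
Qed.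

Definition agrees (L : list (nat * nat)) (O : nat -> option nat) : Prop :=
  forall q a, In (q, a) L -> O q = Some a.

Lemma agrees_nil O : agrees [] O.
Proof. intros q a []. Qed.

Lemma agrees_app L1 L2 O : agrees (L1 ++ L2) O <-> agrees L1 O /\ agrees L2 O.
Proof.
  unfold agrees. split.
  - intros H; split; intros; apply H; apply in_or_app; auto.
  - intros [H1 H2] q a Hi. apply in_app_or in Hi as [Hi|Hi]; auto.
Qed.

Definition finite_use (P : (nat -> option nat) -> Prop) (O : nat -> option nat) : Prop :=
  exists L, agrees L O /\ forall O', agrees L O' -> P O'.

Lemma finite_use_always (P : (nat -> option nat) -> Prop) O :
  (forall O', P O') -> finite_use P O.
Proof. intros HP. exists []. split; [apply agrees_nil | auto]. Qed.

Lemma finite_use_value O q a : O q = Some a -> finite_use (fun O' => O' q = Some a) O.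
Proof.
  intros H. exists [(q, a)]. split.
  - intros q' a' [[= <- <-]|[]]. exact H.
  - intros O' HA. apply HA. now left.
Qed.

Lemma finite_use_and P Q O :
  finite_use P O -> finite_use Q O -> finite_use (fun O' => P O' /\ Q O') O.
Proof.
  intros [L1 [A1 B1]] [L2 [A2 B2]]. exists (L1 ++ L2). rewrite agrees_app. split; auto.
  intros O' HO'. apply agrees_app in HO' as []. auto.
Qed.

Lemma finite_use_mono (P Q : (nat -> option nat) -> Prop) O :
  (forall O', P O' -> Q O') -> finite_use P O -> finite_use Q O.
Proof. intros HPQ [L [A B]]. exists L. auto. Qed.

Lemma finite_use_forall_lt (P : nat -> (nat -> option nat) -> Prop) O k :
  (forall j, j < k -> finite_use (P j) O) ->
  finite_use (fun O' => forall j, j < k -> P j O') O.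
Proof.
  induction k as [|k IH]; intros H.
  - apply finite_use_always. lia.
  - eapply finite_use_mono; [|apply finite_use_and; [apply IH; auto | apply (H k); lia]].
    intros O' [H1 H2] j Hj. destruct (Nat.eq_dec j k) as [->|]; auto. apply H1. lia.
Qed.

Fixpoint eval_finite_use O c v y (H : eval O c v y) {struct H} :
  finite_use (fun O' => eval O' c v y) O
with evals_finite_use O gs v ws (H : evals O gs v ws) {struct H} :
  finite_use (fun O' => evals O' gs v ws) O.
Proof.
  - destruct H as [v|v|i v|f gs v ws y Hgs Hf|f g v y Hf|f g k v z y Hr Hg|f v k Hf Hlt|v y Ho].
    1-3: apply finite_use_always; constructor.
    + eapply finite_use_mono; [|apply finite_use_and;
        [exact (evals_finite_use _ _ _ _ Hgs) | exact (eval_finite_use _ _ _ _ Hf)]].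
      intros O' []; econstructor; eauto.
    + eapply finite_use_mono; [|exact (eval_finite_use _ _ _ _ Hf)].
      intros; constructor; auto.
    + eapply finite_use_mono; [|apply finite_use_and;
        [exact (eval_finite_use _ _ _ _ Hr) | exact (eval_finite_use _ _ _ _ Hg)]].
      intros O' []; econstructor; eauto.
    + eapply finite_use_mono; [|apply finite_use_and;
        [apply (eval_finite_use _ _ _ _ Hf) | apply (finite_use_forall_lt
          (fun j O' => exists z, z <> 0 /\ eval O' f (j :: v) z) _ k)]].
      * intros O' []. constructor; auto.
      * intros j Hj. destruct (Hlt j Hj) as [z [Hz Hz']].
        eapply finite_use_mono; [|apply (eval_finite_use _ _ _ _ Hz')]. eauto.
    + eapply finite_use_mono; [|exact (finite_use_value _ _ _ Ho)].
      intros; constructor; auto.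
  - destruct H as [|g gs v w ws Hg Hgs].
    + apply finite_use_always. constructor.
    + eapply finite_use_mono; [|apply finite_use_and;
        [exact (eval_finite_use _ _ _ _ Hg) | exact (evals_finite_use _ _ _ _ Hgs)]].
      intros O' []; constructor; auto.
Qed.

(** * Primitive recursive expressions *)

Inductive prexp : Type :=
| Var (i : nat)
| Zero
| Succ (e : prexp)
| Comp (f : prexp) (args : list prexp)
| Rec (n b s : prexp).

Fixpoint den (e : prexp) (env : list nat) {struct e} : nat :=
  match e with
  | Var i => nth i env 0
  | Zero => 0
  | Succ e => S (den e env)
  | Comp f args => den f (map (fun a => den a env) args)
  | Rec n b s => nat_rec (fun _ => nat) (den b env) (fun k z => den s (k :: z :: env)) (den n env)
  end.

Fixpoint compile (e : prexp) (n : nat) {struct e} : code :=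
  match e with
  | Var i => CProj i
  | Zero => CZero
  | Succ e => CComp CSucc [compile e n]
  | Comp f args => CComp (compile f (length args)) (map (fun a => compile a n) args)
  | Rec ne b s =>
      CComp (CRec (compile b n) (compile s (S (S n)))) (compile ne n :: map CProj (seq 0 n))
  end.

Lemma map_nth_seq (env : list nat) : map (fun i => nth i env 0) (seq 0 (length env)) = env.
Proof.
  induction env; simpl; auto. f_equal. rewrite <- seq_shift, map_map. simpl. auto.
Qed.

Lemma evals_proj O env : evals O (map CProj (seq 0 (length env))) env env.
Proof.
  pose proof (map_nth_seq env) as H.
  set (l := seq 0 (length env)) in *. clearbody l.
  rewrite <- H at 2. clear H. induction l; simpl; constructor; auto. constructor.
Qed.

Fixpoint compile_correct O (e : prexp) {struct e} :
  forall env, eval O (compile e (length env)) env (den e env).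
Proof.
  destruct e as [i| |e|f args|ne b s]; intro env; simpl.
  - constructor.
  - constructor.
  - econstructor. constructor. apply compile_correct. constructor. constructor.
  - econstructor.
    2: { rewrite <- (length_map (fun a => den a env) args). apply compile_correct. }
    induction args as [|a args IH]; simpl; constructor; auto.
  - econstructor.
    + constructor. apply compile_correct. apply evals_proj.
    + generalize (den ne env). intro k. induction k; simpl.
      * constructor. apply compile_correct.
      * econstructor. exact IHk.
        set (z := nat_rec _ _ _ k).
        change (S (S (length env))) with (length (k :: z :: env)). apply compile_correct.
Qed.

Fixpoint Const (k : nat) : prexp := match k with 0 => Zero | S k => Succ (Const k) end.
Lemma den_Const k env : den (Const k) env = k.
Proof. induction k; simpl; auto. Qed.

Lemma nat_rec_eq (b : nat) (s : nat -> nat -> nat) (F : nat -> nat) :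
  F 0 = b -> (forall k, F (S k) = s k (F k)) -> forall n, nat_rec (fun _ => nat) b s n = F n.
Proof. intros H0 HS n. induction n; simpl; auto. rewrite HS, IHn. auto. Qed.

Lemma den_Comp f args env : den (Comp f args) env = den f (map (fun a => den a env) args).
Proof. reflexivity. Qed.
Lemma den_Var i env : den (Var i) env = nth i env 0.
Proof. reflexivity. Qed.
Lemma den_Succ e env : den (Succ e) env = S (den e env).
Proof. reflexivity. Qed.
Lemma den_Zero env : den Zero env = 0.
Proof. reflexivity. Qed.

Definition addF := Rec (Var 0) (Var 1) (Succ (Var 1)).
Definition Add a b := Comp addF [a; b].
Arguments Add : simpl never.
Lemma den_Add a b env : den (Add a b) env = den a env + den b env.
Proof. unfold Add. rewrite den_Comp. simpl. induction (den a env); simpl; auto. Qed.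

Definition mulF := Rec (Var 0) Zero (Add (Var 1) (Var 3)).
Definition Mul a b := Comp mulF [a; b].
Arguments Mul : simpl never.
Lemma den_Mul a b env : den (Mul a b) env = den a env * den b env.
Proof. unfold Mul. rewrite den_Comp. unfold mulF. cbn -[Add].
  rewrite (nat_rec_eq _ _ (fun m => m * den b env)); auto.
  intros k. rewrite den_Add. cbn -[Add]. lia. Qed.

Definition predF := Rec (Var 0) Zero (Var 0).
Definition Pred a := Comp predF [a].
Arguments Pred : simpl never.
Lemma den_Pred a env : den (Pred a) env = pred (den a env).
Proof. unfold Pred. rewrite den_Comp. simpl. destruct (den a env); simpl; auto. Qed.

Definition subF := Rec (Var 1) (Var 0) (Pred (Var 1)).
Definition Sub a b := Comp subF [a; b].
Arguments Sub : simpl never.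
Lemma den_Sub a b env : den (Sub a b) env = den a env - den b env.
Proof. unfold Sub. rewrite den_Comp. unfold subF. cbn -[Pred].
  rewrite (nat_rec_eq _ _ (fun m => den a env - m)); auto. lia.
  intros k. rewrite den_Pred. cbn -[Pred]. lia. Qed.

Definition ifzF := Rec (Var 0) (Var 1) (Var 4).
Definition Ifz c a b := Comp ifzF [c; a; b].
Arguments Ifz : simpl never.
Lemma den_Ifz c a b env : den (Ifz c a b) env = if den c env =? 0 then den a env else den b env.
Proof. unfold Ifz. rewrite den_Comp. simpl. destruct (den c env); simpl; auto. Qed.

Definition Eqn a b := Add (Sub a b) (Sub b a).
Arguments Eqn : simpl never.
Lemma den_Eqn a b env : den (Eqn a b) env = 0 <-> den a env = den b env.
Proof. unfold Eqn. rewrite den_Add, !den_Sub. lia. Qed.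

Definition Eqb a b := Ifz (Eqn a b) Zero (Const 1).
Arguments Eqb : simpl never.
Lemma den_Eqb a b env : den (Eqb a b) env = if den a env =? den b env then 0 else 1.
Proof.
  unfold Eqb. rewrite den_Ifz, den_Zero, den_Const.
  pose proof (den_Eqn a b env).
  destruct (Nat.eqb_spec (den (Eqn a b) env) 0), (Nat.eqb_spec (den a env) (den b env)); tauto.
Qed.

Definition Nz p := Ifz p (Const 1) Zero.
Arguments Nz : simpl never.
Lemma den_Nz p env : den (Nz p) env = if den p env =? 0 then 1 else 0.
Proof. unfold Nz. rewrite den_Ifz, den_Const, den_Zero. auto. Qed.

Definition oddF := Rec (Var 0) Zero (Sub (Const 1) (Var 1)).
Definition Odd a := Comp oddF [a].
Arguments Odd : simpl never.
Lemma den_Odd a env : den (Odd a) env = Nat.b2n (Nat.odd (den a env)).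
Proof. unfold Odd. rewrite den_Comp. unfold oddF. cbn -[Sub Const].
  rewrite (nat_rec_eq _ _ (fun m => Nat.b2n (Nat.odd m))); auto.
  intros k. rewrite den_Sub, den_Const. cbn -[Sub]. rewrite Nat.odd_succ, <- Nat.negb_odd.
  destruct (Nat.odd k); reflexivity. Qed.

Lemma div2_S k : Nat.div2 (S k) = Nat.div2 k + Nat.b2n (Nat.odd k).
Proof.
  pose proof (Nat.div2_odd k). pose proof (Nat.div2_odd (S k)).
  rewrite Nat.odd_succ, <- Nat.negb_odd in H0. destruct (Nat.odd k); simpl in *; lia.
Qed.

Definition div2F := Rec (Var 0) Zero (Add (Var 1) (Odd (Var 0))).
Definition Div2 a := Comp div2F [a].
Arguments Div2 : simpl never.
Lemma den_Div2 a env : den (Div2 a) env = Nat.div2 (den a env).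
Proof. unfold Div2. rewrite den_Comp. unfold div2F. cbn -[Add Odd].
  rewrite (nat_rec_eq _ _ Nat.div2); auto.
  intros k. rewrite den_Add, den_Odd. cbn -[Add Nat.div2]. rewrite div2_S. reflexivity. Qed.

Definition pairF := Add (Div2 (Mul (Add (Var 0) (Var 1)) (Succ (Add (Var 0) (Var 1))))) (Var 1).
Definition Pair a b := Comp pairF [a; b].
Arguments Pair : simpl never.
Lemma den_Pair a b env : den (Pair a b) env = cpair (den a env) (den b env).
Proof. unfold Pair. rewrite den_Comp. unfold pairF.
  rewrite den_Add, den_Div2, den_Mul, den_Succ, !den_Add. simpl.
  unfold cpair. rewrite Nat.div2_div. f_equal. f_equal. f_equal. lia. Qed.

Lemma map_den_vars pre vs :
  map (fun a => den a (pre ++ vs)) (map Var (seq (length pre) (length vs))) = vs.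
Proof.
  rewrite map_map. simpl. revert pre. induction vs; intros pre; simpl; auto.
  f_equal.
  - rewrite app_nth2 by lia. rewrite Nat.sub_diag. reflexivity.
  - specialize (IHvs (pre ++ [a])). rewrite length_app in IHvs. simpl in IHvs.
    rewrite <- app_assoc in IHvs. simpl in IHvs. rewrite Nat.add_1_r in IHvs. exact IHvs.
Qed.

Definition BEx (P n : prexp) (args : list prexp) :=
  Comp (Rec (Var 0) (Const 1) (Mul (Var 1) (Comp P (Var 0 :: map Var (seq 3 (length args))))))
    (n :: args).
Arguments BEx : simpl never.

Lemma nat_rec_ext b s s' n : (forall k z, s k z = s' k z) ->
  nat_rec (fun _ => nat) b s n = nat_rec (fun _ => nat) b s' n.
Proof. intro H. induction n; simpl; auto. rewrite IHn. auto. Qed.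

Lemma map_den_vars3 x y z vs :
  map (fun a => den a (x :: y :: z :: vs)) (map Var (seq 3 (length vs))) = vs.
Proof. exact (map_den_vars [x; y; z] vs). Qed.

Lemma den_BEx P n args env :
  den (BEx P n args) env = 0 <->
  exists i, i < den n env /\ den P (i :: map (fun a => den a env) args) = 0.
Proof.
  unfold BEx. rewrite den_Comp. cbn -[Mul Const].
  set (vs := map (fun a => den a env) args).
  assert (Hl : length args = length vs) by (unfold vs; rewrite length_map; auto).
  rewrite Hl.
  rewrite (nat_rec_ext _ _ (fun k z => z * den P (k :: vs))).
  2: { intros k z. rewrite den_Mul, den_Comp. cbn -[Mul]. rewrite map_den_vars3. reflexivity. }
  rewrite den_Const. induction (den n env) as [|m IH]; simpl.
  - split; [discriminate| intros [i [Hi _]]; lia].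
  - rewrite Nat.mul_eq_0, IH. split.
    + intros [[i [Hi H]]|H]; exists i || exists m; split; auto; lia.
    + intros [i [Hi H]]. destruct (Nat.eq_dec i m); [subst; auto| left; exists i; split; auto; lia].
Qed.

Definition BAll (P n : prexp) (args : list prexp) :=
  Comp (Rec (Var 0) Zero (Add (Var 1) (Comp P (Var 0 :: map Var (seq 3 (length args))))))
    (n :: args).
Arguments BAll : simpl never.

Lemma den_BAll P n args env :
  den (BAll P n args) env = 0 <->
  forall i, i < den n env -> den P (i :: map (fun a => den a env) args) = 0.
Proof.
  unfold BAll. rewrite den_Comp. cbn -[Add].
  set (vs := map (fun a => den a env) args).
  assert (Hl : length args = length vs) by (unfold vs; rewrite length_map; auto).
  rewrite Hl.
  rewrite (nat_rec_ext _ _ (fun k z => z + den P (k :: vs))).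
  2: { intros k z. rewrite den_Add, den_Comp. cbn -[Add]. rewrite map_den_vars3. reflexivity. }
  induction (den n env) as [|m IH]; simpl.
  - split; auto; intros; lia.
  - rewrite Nat.eq_add_0, IH. split.
    + intros [H1 H2] i Hi. destruct (Nat.eq_dec i m); [subst; auto| apply H1; lia].
    + intros H. split; auto.
Qed.

Definition USum (P n : prexp) (args : list prexp) :=
  Comp (Rec (Var 0) Zero
          (Add (Var 1) (Ifz (Comp P (Var 0 :: map Var (seq 3 (length args)))) (Var 0) Zero)))
    (n :: args).
Arguments USum : simpl never.

Lemma den_USum P n args env x :
  (forall i, i < den n env -> (den P (i :: map (fun a => den a env) args) = 0 <-> i = x)) ->
  x < den n env -> den (USum P n args) env = x.
Proof.
  unfold USum. rewrite den_Comp. cbn -[Add Ifz].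
  set (vs := map (fun a => den a env) args).
  assert (Hl : length args = length vs) by (unfold vs; rewrite length_map; auto).
  rewrite Hl.
  rewrite (nat_rec_ext _ _ (fun k z => z + (if den P (k :: vs) =? 0 then k else 0))).
  2: { intros k z. rewrite den_Add, den_Ifz, den_Comp. cbn -[Add].
       rewrite map_den_vars3. reflexivity. }
  intros H Hx.
  assert (forall m, m <= den n env -> nat_rec (fun _ => nat) 0
     (fun k z => z + (if den P (k :: vs) =? 0 then k else 0)) m = if x <? m then x else 0).
  { induction m; intros Hm; simpl; auto.
    rewrite IHm by lia. destruct (Nat.eq_dec m x).
    - subst. assert (den P (x :: vs) = 0) by (apply H; auto; lia). rewrite H0. simpl.
      rewrite Nat.ltb_irrefl. destruct (x <? S x) eqn:E; auto. apply Nat.ltb_nlt in E; lia.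
    - destruct (den P (m :: vs) =? 0) eqn:E.
      + apply Nat.eqb_eq, H in E; lia.
      + destruct (x <? m) eqn:E1; destruct (x <? S m) eqn:E2; auto;
        try (apply Nat.ltb_lt in E1; apply Nat.ltb_nlt in E2; lia);
        try (apply Nat.ltb_nlt in E1; apply Nat.ltb_lt in E2; lia). }
  rewrite H0 by lia. apply Nat.ltb_lt in Hx. rewrite Hx. auto.
Qed.

(* [cfst z] is the unique [x <= z] with [<x, y> = z] for some [y <= z]: defining the
   projections as denotations makes them primitive recursive by construction. *)
Definition fyP := Eqn (Pair (Var 1) (Var 0)) (Var 2).          (* [y; x; z] *)
Definition fxP := BEx fyP (Succ (Var 1)) [Var 0; Var 1].       (* [x; z] *)
Definition fstF := USum fxP (Succ (Var 0)) [Var 0].            (* [z] *)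
Definition sxP := Eqn (Pair (Var 0) (Var 1)) (Var 2).          (* [x; y; z] *)
Definition syP := BEx sxP (Succ (Var 1)) [Var 0; Var 1].       (* [y; z] *)
Definition sndF := USum syP (Succ (Var 0)) [Var 0].

Definition cfst z := den fstF [z].
Definition csnd z := den sndF [z].

Lemma cfst_pair x y : cfst (cpair x y) = x.
Proof.
  unfold cfst, fstF. apply den_USum.
  - intros i Hi. cbn -[fxP]. unfold fxP. rewrite den_BEx. cbn -[fyP]. split.
    + intros [j [Hj H]]. unfold fyP in H. rewrite den_Eqn, den_Pair in H. cbn in H.
      apply cpair_inj in H. lia.
    + intros ->. exists y. split. cbn -[cpair]. pose proof (cpair_ge_r x y). lia.
      unfold fyP. rewrite den_Eqn, den_Pair. reflexivity.
  - cbn -[cpair]. pose proof (cpair_ge_l x y). lia.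
Qed.

Lemma csnd_pair x y : csnd (cpair x y) = y.
Proof.
  unfold csnd, sndF. apply den_USum.
  - intros i Hi. cbn -[syP]. unfold syP. rewrite den_BEx. cbn -[sxP]. split.
    + intros [j [Hj H]]. unfold sxP in H. rewrite den_Eqn, den_Pair in H. cbn in H.
      apply cpair_inj in H. lia.
    + intros ->. exists x. split. cbn -[cpair]. pose proof (cpair_ge_l x y). lia.
      unfold sxP. rewrite den_Eqn, den_Pair. reflexivity.
  - cbn -[cpair]. pose proof (cpair_ge_r x y). lia.
Qed.

Lemma cpair_fst_snd z : cpair (cfst z) (csnd z) = z.
Proof. destruct (cpair_surj z) as [x [y <-]]. rewrite cfst_pair, csnd_pair. auto. Qed.

Definition Fst a := Comp fstF [a].
Definition Snd a := Comp sndF [a].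
Arguments Fst : simpl never.
Arguments Snd : simpl never.
Lemma den_Fst a env : den (Fst a) env = cfst (den a env).
Proof. reflexivity. Qed.
Lemma den_Snd a env : den (Snd a) env = csnd (den a env).
Proof. reflexivity. Qed.

Lemma cfst0 : cfst 0 = 0.
Proof. exact (cfst_pair 0 0). Qed.
Lemma csnd0 : csnd 0 = 0.
Proof. exact (csnd_pair 0 0). Qed.

Definition Cons h t := Succ (Pair h t).
Arguments Cons : simpl never.
Lemma den_Cons h t env : den (Cons h t) env = S (cpair (den h env) (den t env)).
Proof. unfold Cons. rewrite den_Succ, den_Pair. auto. Qed.

Definition ltl w := csnd (pred w).
Definition lhd w := cfst (pred w).
Definition ldrop k w := nat_rec (fun _ => nat) w (fun _ z => ltl z) k.
Definition lnth k w := lhd (ldrop k w).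

Definition lnthF := Fst (Pred (Rec (Var 0) (Var 1) (Snd (Pred (Var 1))))).  (* [k; w] *)
Definition Lnth k w := Comp lnthF [k; w].
Arguments Lnth : simpl never.
Lemma den_Lnth k w env : den (Lnth k w) env = lnth (den k env) (den w env).
Proof.
  unfold Lnth. rewrite den_Comp. unfold lnthF. rewrite den_Fst, den_Pred. cbn -[Snd Pred].
  unfold lnth, lhd, ldrop. f_equal. f_equal.
  apply nat_rec_ext. intros. rewrite den_Snd, den_Pred. reflexivity.
Qed.

Lemma ltl_lcode x l : ltl (lcode (x :: l)) = lcode l.
Proof. unfold ltl. simpl. apply csnd_pair. Qed.
Lemma ltl0 : ltl 0 = 0.
Proof. unfold ltl. apply csnd0. Qed.
Lemma lhd_lcode x l : lhd (lcode (x :: l)) = x.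
Proof. unfold lhd. simpl. apply cfst_pair. Qed.
Lemma lhd0 : lhd 0 = 0.
Proof. unfold lhd. apply cfst0. Qed.

Lemma ldrop_S k w : ldrop (S k) w = ldrop k (ltl w).
Proof.
  unfold ldrop. revert w. induction k; intros w; simpl; auto.
  f_equal. apply IHk.
Qed.

Lemma ldrop0_any k : ldrop k 0 = 0.
Proof. induction k; simpl; auto. unfold ldrop in *. simpl. rewrite IHk. apply ltl0. Qed.

Lemma lnth_lcode i l : lnth i (lcode l) = nth i l 0.
Proof.
  unfold lnth. revert i; induction l; intros i.
  - simpl. rewrite ldrop0_any. destruct i; apply lhd0.
  - destruct i.
    + simpl. apply lhd_lcode.
    + rewrite ldrop_S. change (S (cpair a (lcode l))) with (lcode (a :: l)).
      rewrite ltl_lcode. apply IHl.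
Qed.

Definition tbF := Odd (Rec (Var 0) (Var 1) (Div2 (Var 1))).  (* [p; u] *)
Definition Tb u p := Comp tbF [p; u].
Arguments Tb : simpl never.
Lemma den_Tb u p env : den (Tb u p) env = Nat.b2n (Nat.testbit (den u env) (den p env)).
Proof.
  unfold Tb. rewrite den_Comp. unfold tbF. rewrite den_Odd. cbn -[Div2].
  rewrite Nat.testbit_odd. f_equal. f_equal.
  rewrite (nat_rec_eq _ _ (fun m => Nat.shiftr (den u env) m)); auto.
  intros k. rewrite den_Div2. cbn -[Nat.shiftr Nat.div2].
  rewrite Nat.div2_spec. rewrite !Nat.shiftr_shiftr. f_equal. lia.
Qed.


(** * K_1 embeds into K_2^eff *)

Definition QueryAt (k : nat) : code := CComp COrc [compile (Const k) 1].

Lemma eval_QueryAt O k n y : O k = Some y -> eval O (QueryAt k) [n] y.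
Proof.
  intros Hk. econstructor; [constructor; [|constructor] | constructor; exact Hk].
  pose proof (compile_correct O (Const k) [n]) as H. rewrite den_Const in H. exact H.
Qed.

(* On the oracle [k2fun a (+) k2fun b], [QueryAt 3] reads [k2fun b 1 = b] and
   [QueryAt 4] reads [k2fun a 2 = k2_index]. *)
Definition app_program_exp : prexp :=
  Pair (Const 3) (Pair (Var 2) (Cons (Const (encode (CProj 0)))
    (Cons (Pair (Const 3) (Pair (Var 1) (Cons (Const (encode (QueryAt 3))) Zero)))
      (Cons (Const (encode (QueryAt 4))) Zero)))).

(* Environment [n; a; i] where [i] is the index of this very expression: it is passed
   as an argument (and read back from the oracle), since it cannot occur as a constant. *)
Definition k2_exp : prexp := Ifz (Var 0) app_program_exp (Ifz (Pred (Var 0)) (Var 1) (Var 2)).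
Definition k2_prog : code := compile k2_exp 3.
Definition k2_index : nat := encode k2_prog.

Definition k2fun (a n : nat) : nat := den k2_exp [n; a; k2_index].

Definition app_program (A : code) : code :=
  CComp k2_prog [CProj 0; CComp A [QueryAt 3]; QueryAt 4].

Lemma k2fun_1 a : k2fun a 1 = a.
Proof. unfold k2fun, k2_exp. rewrite !den_Ifz, den_Pred. reflexivity. Qed.

Lemma k2fun_2 a : k2fun a 2 = k2_index.
Proof. unfold k2fun, k2_exp. rewrite !den_Ifz, den_Pred. reflexivity. Qed.

Lemma k2fun_0 A : k2fun (encode A) 0 = encode (app_program A).
Proof.
  unfold k2fun, k2_exp. rewrite den_Ifz. cbn [den nth Nat.eqb]. unfold app_program_exp.
  rewrite !den_Pair, !den_Cons, !den_Pair, !den_Cons, !den_Const, den_Zero.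
  unfold app_program. rewrite !encode_CComp. reflexivity.
Qed.

Lemma k2fun_total_computable a : total_computable (k2fun a).
Proof.
  set (e := Comp k2_exp [Var 0; Const a; Const k2_index]).
  exists (encode (compile e 1)). intros n. exists (compile e 1). split; [reflexivity|].
  pose proof (compile_correct empty_oracle e [n]) as H.
  unfold e in H at 2. rewrite den_Comp in H. cbn [map] in H. rewrite !den_Const, den_Var in H.
  exact H.
Qed.

Lemma app_program_eval A b c n :
  eval empty_oracle A [b] c ->
  eval (join (fun x => Some (k2fun (encode A) x)) (fun x => Some (k2fun b x)))
       (app_program A) [n] (k2fun c n).
Proof.
  intros HA. set (O := join _ _).
  econstructor; [|exact (compile_correct O k2_exp [n; c; k2_index])].
  repeat constructor.
  - econstructor; [constructor; [|constructor] |].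
    + apply eval_QueryAt. unfold O, join. simpl. now rewrite k2fun_1.
    + exact (eval_oracle_le _ _ (oracle_le_empty O) _ _ _ HA).
  - apply eval_QueryAt. unfold O, join. simpl. now rewrite k2fun_2.
Qed.

Definition K1_to_K2eff (a : K1) : K2eff := exist _ (k2fun a) (k2fun_total_computable a).

Lemma K1_K2eff_embedding : embedding K1_app K2eff_app K1_to_K2eff.
Proof.
  split.
  - intros a a' H. apply (f_equal (fun f => proj1_sig f 1)) in H. simpl in H.
    now rewrite !k2fun_1 in H.
  - intros a b c [A [<- HA]] n. simpl. exists (k2fun (encode A) 0). split; [reflexivity|].
    rewrite k2fun_0. exists (app_program A). split; [reflexivity|].
    exact (app_program_eval A b c n HA).
Qed.

(** * K_2^eff embeds into B^eff *)

Lemma total_partial_computable (f : nat -> nat) :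
  total_computable f -> partial_computable (fun n => Some (f n)).
Proof.
  intros [e He]. exists e. intros n y. split.
  - now intros [= <-].
  - intros H. f_equal. exact (Phi_functional _ _ _ _ _ (He n) H).
Qed.

Definition K2eff_to_Beff (a : K2eff) : Beff :=
  exist _ (fun n => Some (proj1_sig a n)) (total_partial_computable _ (proj2_sig a)).

Lemma K2eff_Beff_embedding : embedding K2eff_app Beff_app K2eff_to_Beff.
Proof.
  split.
  - intros [a Ha] [a' Ha'] H. injection H as H.
    assert (a = a') as <-.
    { apply functional_extensionality. intro x. apply (f_equal (fun F => F x)) in H. congruence. }
    f_equal. apply proof_irrelevance.
  - intros a b c H n y. simpl. split.
    + intros [= <-]. apply H.
    + intros E. f_equal. eapply Bapp_functional; [apply H | exact E].
Qed.

(** * Representing partial functions by c.e. sets *)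

Definition graph_bit (u z y : nat) : bool := Nat.testbit u (cpair (cpair z y) 1).

(* The finite partial function coded by [u]: [z] is sent to the least [y] with
   [<<z, y>, 1>] in [D_u] (all such [y] lie below [u]). *)
Definition fin_fun (u : nat) : nat -> option nat :=
  fun z => find (graph_bit u z) (seq 0 u).

Lemma testbit_lt u p : Nat.testbit u p = true -> p < u.
Proof.
  intros H. destruct u as [|u]; [now rewrite Nat.bits_0 in H|].
  destruct (le_lt_dec p (Nat.log2 (S u))).
  - pose proof (Nat.log2_lt_lin (S u)). lia.
  - rewrite Nat.bits_above_log2 in H; [discriminate | auto].
Qed.

Lemma find_seq_spec (f : nat -> bool) s n y :
  find f (seq s n) = Some y <->
  s <= y < s + n /\ f y = true /\ forall y', s <= y' < y -> f y' = false.
Proof.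
  revert s. induction n as [|n IH]; intros s; simpl; [split; [discriminate | lia]|].
  destruct (f s) eqn:E.
  - split.
    + intros [= <-]. repeat split; auto; lia.
    + intros [H1 [H2 H3]]. destruct (Nat.eq_dec y s); [congruence|].
      rewrite H3 in E; [discriminate | lia].
  - rewrite IH. split.
    + intros [H1 [H2 H3]]. split; [lia | split; [exact H2|]]. intros y' Hy'.
      destruct (Nat.eq_dec y' s); [subst; auto | apply H3; lia].
    + intros [H1 [H2 H3]]. destruct (Nat.eq_dec y s); [congruence|].
      split; [lia | split; [exact H2|]]. intros; apply H3; lia.
Qed.

Lemma fin_fun_spec u z y :
  fin_fun u z = Some y <-> graph_bit u z y = true /\ forall y', y' < y -> graph_bit u z y' = false.
Proof.
  unfold fin_fun. rewrite find_seq_spec. split.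
  - intros [_ [H1 H2]]. split; auto. intros; apply H2; lia.
  - intros [H1 H2]. split; [|split; auto; intros; apply H2; lia].
    apply testbit_lt in H1. pose proof (cpair_ge_r (cpair z y) 1).
    pose proof (cpair_ge_r z y). pose proof (cpair_ge_l (cpair z y) 1). lia.
Qed.

Lemma fin_fun_defined u z y : graph_bit u z y = true -> exists y', fin_fun u z = Some y'.
Proof.
  intros H. induction y as [y IH] using (well_founded_induction lt_wf).
  destruct (classic (exists y', y' < y /\ graph_bit u z y' = true)) as [[y' [H1 H2]]|Hn].
  - exact (IH y' H1 H2).
  - exists y. apply fin_fun_spec. split; auto. intros y' Hy'.
    destruct (graph_bit u z y') eqn:E; auto. exfalso; eauto.
Qed.

Definition fin_graph_code (L : list (nat * nat)) : nat :=
  fold_right (fun '(x, y) acc => Nat.setbit acc (cpair (cpair x y) 1)) 0 L.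

Lemma fin_graph_code_bit L p :
  Nat.testbit (fin_graph_code L) p = true <-> exists x y, In (x, y) L /\ p = cpair (cpair x y) 1.
Proof.
  induction L as [|[x y] L IH]; simpl.
  - rewrite Nat.bits_0. split; [discriminate | intros [x [y [[] _]]]].
  - rewrite Nat.setbit_iff, IH. split.
    + intros [<-|[x' [y' [H1 H2]]]]; eauto.
    + intros [x1 [y1 [[[= <- <-]|H1] H2]]]; auto. right; eauto.
Qed.

Lemma fin_fun_graph_code L O : agrees L O -> agrees L (fin_fun (fin_graph_code L)).
Proof.
  intros HL x y Hi.
  assert (Hb : graph_bit (fin_graph_code L) x y = true) by (apply fin_graph_code_bit; eauto).
  destruct (fin_fun_defined _ _ _ Hb) as [y' Hy']. rewrite Hy'.
  apply fin_fun_spec, proj1, fin_graph_code_bit in Hy' as [x1 [y1 [Hi1 E]]].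
  apply cpair_inj in E as [E _]. apply cpair_inj in E as [<- <-].
  apply HL in Hi, Hi1. congruence.
Qed.

Definition bapp (c s : nat -> option nat) : nat -> option nat :=
  fun z => match excluded_middle_informative (exists y, Bapp c s z y) with
           | left H => Some (proj1_sig (constructive_indefinite_description _ H))
           | right _ => None
           end.

Lemma bapp_spec c s z y : bapp c s z = Some y <-> Bapp c s z y.
Proof.
  unfold bapp. destruct excluded_middle_informative as [H|H].
  - destruct constructive_indefinite_description as [y' Hy']. simpl. split.
    + now intros [= <-].
    + intros E. f_equal. eapply Bapp_functional; eauto.
  - split; [discriminate | intros E; exfalso; eauto].
Qed.

Lemma join_oracle_le c c' s s' :
  oracle_le c c' -> oracle_le s s' -> oracle_le (join c s) (join c' s').
Proof. intros H1 H2 q a. unfold join. destruct (Nat.odd q); auto. Qed.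

Lemma bapp_oracle_le c c' s s' :
  oracle_le c c' -> oracle_le s s' -> oracle_le (bapp c s) (bapp c' s').
Proof.
  intros H1 H2 z w. rewrite !bapp_spec. intros [e [He [C [HC HE]]]].
  exists e. split; auto. exists C. split; auto.
  eapply eval_oracle_le; [apply join_oracle_le|]; eauto.
Qed.

Definition even_part (L : list (nat * nat)) : list (nat * nat) :=
  flat_map (fun '(q, a) => if Nat.odd q then [] else [(Nat.div2 q, a)]) L.
Definition odd_part (L : list (nat * nat)) : list (nat * nat) :=
  flat_map (fun '(q, a) => if Nat.odd q then [(Nat.div2 q, a)] else []) L.

Lemma agrees_join L c s :
  agrees L (join c s) <-> agrees (even_part L) c /\ agrees (odd_part L) s.
Proof.
  unfold agrees, even_part, odd_part, join. split.
  - intros H. split; intros z a Hi; apply in_flat_map in Hi as [[q a'] [Hi Hi']];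
      specialize (H _ _ Hi); destruct (Nat.odd q); simpl in Hi'; try contradiction;
      destruct Hi' as [[= <- <-]|[]]; auto.
  - intros [H1 H2] q a Hi. destruct (Nat.odd q) eqn:E; [apply H2 | apply H1];
      apply in_flat_map; exists (q, a); rewrite E; simpl; auto.
Qed.

Lemma finite_use_join_l P c s :
  finite_use P (join c s) -> finite_use (fun c' => P (join c' s)) c.
Proof.
  intros [L [A B]]. apply agrees_join in A as [A1 A2]. exists (even_part L).
  split; auto. intros c' H. apply B, agrees_join. auto.
Qed.

Lemma finite_use_join_r P c s :
  finite_use P (join c s) -> finite_use (fun s' => P (join c s')) s.
Proof.
  intros [L [A B]]. apply agrees_join in A as [A1 A2]. exists (odd_part L).
  split; auto. intros s' H. apply B, agrees_join. auto.
Qed.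

Lemma Bapp_finite_use_l c s z w : Bapp c s z w -> finite_use (fun c' => Bapp c' s z w) c.
Proof.
  intros [e [He [C [HC HE]]]].
  eapply finite_use_mono; [|apply finite_use_and;
    [exact (finite_use_value _ _ _ He) |
     exact (finite_use_join_l _ _ _ (eval_finite_use _ _ _ _ HE))]].
  intros c' [H1 H2]. exists e. split; auto. exists C. auto.
Qed.

Lemma Bapp_finite_use_r c s z w : Bapp c s z w -> finite_use (fun s' => Bapp c s' z w) s.
Proof.
  intros [e [He [C [HC HE]]]].
  eapply finite_use_mono; [|exact (finite_use_join_r _ _ _ (eval_finite_use _ _ _ _ HE))].
  intros s' H. exists e. split; auto. exists C. auto.
Qed.

Lemma finite_use_agrees (F : (nat -> option nat) -> nat -> option nat) O L :
  (forall q a, F O q = Some a -> finite_use (fun O' => F O' q = Some a) O) ->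
  agrees L (F O) -> finite_use (fun O' => agrees L (F O')) O.
Proof.
  intros HF. induction L as [|[q a] L IH]; intros HL.
  - apply finite_use_always. intros; apply agrees_nil.
  - eapply finite_use_mono; [|apply finite_use_and;
      [apply (HF q a), HL; now left | apply IH; intros ? ? ?; apply HL; now right]].
    intros O' [H1 H2] q' a' [[= <- <-]|Hi]; auto.
Qed.

Lemma agrees_bapp_finite_use_l L c s :
  agrees L (bapp c s) -> finite_use (fun c' => agrees L (bapp c' s)) c.
Proof.
  apply (finite_use_agrees (fun c' => bapp c' s)). intros q a H.
  eapply finite_use_mono; [|apply Bapp_finite_use_l, bapp_spec, H].
  intros c' Hc'. now apply bapp_spec.
Qed.

Lemma agrees_bapp_finite_use_r L c s :
  agrees L (bapp c s) -> finite_use (fun s' => agrees L (bapp c s')) s.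
Proof.
  apply (finite_use_agrees (bapp c)). intros q a H.
  eapply finite_use_mono; [|apply Bapp_finite_use_r, bapp_spec, H].
  intros s' Hs'. now apply bapp_spec.
Qed.

(* [Erep c] is the image of [c] in [E]: the graph points [<<x, y>, 1>] of [c], and
   [<m, u>] for even [u] and [m] in the image of [c . fin_fun u]. *)
Inductive Erep : (nat -> option nat) -> nat -> Prop :=
| Erep_graph c x y : c x = Some y -> Erep c (cpair (cpair x y) 1)
| Erep_app c m u :
    Nat.testbit u 0 = false -> Erep (bapp c (fin_fun u)) m -> Erep c (cpair m u).

Lemma Erep_oracle_le c n : Erep c n -> forall c', oracle_le c c' -> Erep c' n.
Proof.
  induction 1; intros c' Hc; constructor; auto.
  apply IHErep, bapp_oracle_le; auto. intros q a; auto.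
Qed.

Lemma Erep_neq0 c : ~ Erep c 0.
Proof.
  intro H. remember 0 as n eqn:En. revert En.
  induction H; intros En; apply cpair_eq0 in En as [E1 E2]; [lia | subst; auto].
Qed.

Lemma Erep_graph_iff c x y : Erep c (cpair (cpair x y) 1) <-> c x = Some y.
Proof.
  split; [|apply Erep_graph].
  intros H. inversion H as [c0 x0 y0 H0 E1 E2|c0 m u Hu H0 E1 E2].
  - apply cpair_inj in E2 as [E2 _]. now apply cpair_inj in E2 as [-> ->].
  - apply cpair_inj in E2 as [_ ->]. discriminate.
Qed.

Lemma Erep_finite_use c n : Erep c n -> finite_use (fun c' => Erep c' n) c.
Proof.
  induction 1 as [c x y H|c m u Hu H [L [HL HL']]].
  - eapply finite_use_mono; [|exact (finite_use_value _ _ _ H)]. intros c'; apply Erep_graph.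
  - eapply finite_use_mono; [|exact (agrees_bapp_finite_use_l _ _ _ HL)].
    intros c' Hc'. constructor; auto.
Qed.

Lemma Erep_inj a a' : (forall n, Erep a n <-> Erep a' n) -> a = a'.
Proof.
  intros H. apply functional_extensionality. intro x.
  destruct (a x) as [y|] eqn:E1, (a' x) as [y'|] eqn:E2; auto.
  - apply Erep_graph_iff, H, Erep_graph_iff in E1. congruence.
  - apply Erep_graph_iff, H, Erep_graph_iff in E1. congruence.
  - apply Erep_graph_iff, H, Erep_graph_iff in E2. congruence.
Qed.

Lemma Erep_E_app a b n :
  Erep (bapp a b) n <-> exists u, Erep a (cpair n u) /\ forall i, inD i u -> Erep b i.
Proof.
  split.
  - intros H. destruct (Erep_finite_use _ _ H) as [L [HL HL']].
    destruct (agrees_bapp_finite_use_r _ _ _ HL) as [Lb [Hb Hb']].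
    exists (fin_graph_code Lb). split.
    + constructor.
      * destruct (Nat.testbit (fin_graph_code Lb) 0) eqn:E; auto.
        apply fin_graph_code_bit in E as [x [y [_ E]]].
        symmetry in E. apply cpair_eq0 in E. lia.
      * apply HL', Hb'. exact (fin_fun_graph_code _ _ Hb).
    + intros i Hi. apply fin_graph_code_bit in Hi as [x [y [Hi ->]]].
      constructor. apply Hb; auto.
  - intros [u [H1 H2]].
    inversion H1 as [c0 x0 y0 H0 E1 E2|c0 m u' Hu H0 E1 E2].
    + apply cpair_inj in E2 as [_ <-]. exfalso. apply (Erep_neq0 b), H2. reflexivity.
    + apply cpair_inj in E2 as [-> ->]. eapply Erep_oracle_le; [exact H0|].
      apply bapp_oracle_le; [intros q a0; auto|].
      intros z y Hz. apply fin_fun_spec in Hz as [Hz _]. apply Erep_graph_iff, H2, Hz.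
Qed.

(** * The image of a partial computable function is c.e. *)

Opaque cfst csnd.

Ltac simpcp := repeat rewrite ?cfst_pair, ?csnd_pair in *.

(* For [n = <...<<<x, y>, 1>, u_(k-1)>, ..., u_0>], [fst_iter k n = <<x, y>, 1>],
   [stage_arg j n = u_j] and [stage c n k = c . fin_fun u_0 . ... . fin_fun u_(k-1)]. *)
Definition fst_iter (k n : nat) : nat :=
  nat_rec (fun _ => nat -> nat) (fun n => n) (fun _ r n => r (cfst n)) k n.
Lemma fst_iter_0 n : fst_iter 0 n = n. Proof. reflexivity. Qed.
Lemma fst_iter_S k n : fst_iter (S k) n = fst_iter k (cfst n). Proof. reflexivity. Qed.

Definition stage_arg (j n : nat) := csnd (fst_iter j n).

Fixpoint stage (c : nat -> option nat) (n j : nat) : nat -> option nat :=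
  match j with 0 => c | S j' => bapp (stage c n j') (fin_fun (stage_arg j' n)) end.

Lemma stage_shift c m u j : stage c (cpair m u) (S j) = stage (bapp c (fin_fun u)) m j.
Proof.
  induction j; simpl.
  - unfold stage_arg. rewrite fst_iter_0, csnd_pair. auto.
  - simpl in IHj. rewrite IHj. unfold stage_arg. rewrite fst_iter_S, cfst_pair. auto.
Qed.

Lemma Erep_iff_stage c n :
  Erep c n <-> exists k x y, fst_iter k n = cpair (cpair x y) 1 /\
    (forall j, j < k -> Nat.testbit (stage_arg j n) 0 = false) /\ stage c n k x = Some y.
Proof.
  split.
  - induction 1.
    + exists 0, x, y. split; auto. split; auto. intros; lia.
    + destruct IHErep as [k [x [y [H1 [H2 H3]]]]]. exists (S k), x, y. split; [|split].
      * rewrite fst_iter_S, cfst_pair. auto.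
      * intros j Hj. destruct j; unfold stage_arg.
        -- rewrite fst_iter_0, csnd_pair. auto.
        -- rewrite fst_iter_S, cfst_pair. apply H2. lia.
      * rewrite stage_shift. auto.
  - intros [k [x [y [H1 [H2 H3]]]]]. revert c n H1 H2 H3. induction k; intros c n H1 H2 H3.
    + rewrite fst_iter_0 in H1. subst n. constructor. auto.
    + destruct (cpair_surj n) as [m [u <-]]. constructor.
      * specialize (H2 0 ltac:(lia)). unfold stage_arg in H2.
        rewrite fst_iter_0, csnd_pair in H2. auto.
      * rewrite stage_shift in H3. apply IHk; auto.
        -- rewrite fst_iter_S, cfst_pair in H1. auto.
        -- intros j Hj. specialize (H2 (S j) ltac:(lia)).
           unfold stage_arg in *. rewrite fst_iter_S, cfst_pair in H2. auto.
Qed.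

(* A certificate is a coded list of entries [<J, W>]: a judgment [J] and a witness [W]
   (an intermediate value), justified by the judgments of earlier entries.
   [jEV j c v y]: program [c] on the coded argument list [v] yields [y] relative to
   [stage_oracle a n j]; [jEVS]: the same for a list of programs; [jMU j f v k]: [f] is
   nonzero on [i :: v] for all [i < k]; [jFACT j x y]: [stage a n j x = Some y];
   [jISC c], [jISCL gl]: [c] codes a program, [gl] a list of programs. *)
Definition jEV j c v y := cpair 1 (cpair j (cpair c (cpair v y))).
Definition jEVS j gl v ws := cpair 2 (cpair j (cpair gl (cpair v ws))).
Definition jMU j f v k := cpair 3 (cpair j (cpair f (cpair v k))).
Definition jFACT j x y := cpair 4 (cpair j (cpair x y)).
Definition jISC c := cpair 5 c.
Definition jISCL gl := cpair 6 gl.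

Definition EVok (n j c v y W : nat) (has : nat -> Prop) : Prop :=
  let ct := cfst c in let cd := csnd c in
  match ct with
  | 0 => cd = 0 /\ y = 0
  | 1 => cd = 0 /\ y = S (lhd v)
  | 2 => y = lnth cd v
  | 3 => has (jEVS j (csnd cd) v W) /\ has (jEV j (cfst cd) W y)
  | 4 => v <> 0 /\ (if lhd v =? 0 then has (jEV j (cfst cd) (ltl v) y) /\ has (jISC (csnd cd))
                   else has (jEV j c (S (cpair (pred (lhd v)) (ltl v))) W) /\
                        has (jEV j (csnd cd) (S (cpair (pred (lhd v)) (S (cpair W (ltl v))))) y))
  | 5 => has (jMU j cd v y) /\ has (jEV j cd (S (cpair y v)) 0)
  | 6 => cd = 0 /\ j <> 0 /\
         (if Nat.odd (lhd v)
          then graph_bit (stage_arg (pred j) n) (Nat.div2 (lhd v)) y = true /\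
               forall y', y' < y -> graph_bit (stage_arg (pred j) n) (Nat.div2 (lhd v)) y' = false
          else has (jFACT (pred j) (Nat.div2 (lhd v)) y))
  | _ => False
  end.

Definition EVSok (j gl v ws : nat) (has : nat -> Prop) : Prop :=
  if gl =? 0 then ws = 0
  else ws <> 0 /\ has (jEV j (lhd gl) v (lhd ws)) /\ has (jEVS j (ltl gl) v (ltl ws)).

Definition MUok (j f v k W : nat) (has : nat -> Prop) : Prop :=
  if k =? 0 then True
  else W <> 0 /\ has (jMU j f v (pred k)) /\ has (jEV j f (S (cpair (pred k) v)) W).

Definition FACTok (ea j x y W : nat) (has : nat -> Prop) : Prop :=
  if j =? 0 then has (jEV 0 ea (S (cpair x 0)) y)
  else has (jFACT (pred j) 0 W) /\ has (jEV j W (S (cpair x 0)) y).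

Definition ISCok (c : nat) (has : nat -> Prop) : Prop :=
  match cfst c with
  | 0 | 1 | 6 => csnd c = 0
  | 2 => True
  | 3 => has (jISC (cfst (csnd c))) /\ has (jISCL (csnd (csnd c)))
  | 4 => has (jISC (cfst (csnd c))) /\ has (jISC (csnd (csnd c)))
  | 5 => has (jISC (csnd c))
  | _ => False
  end.

Definition ISCLok (gl : nat) (has : nat -> Prop) : Prop :=
  if gl =? 0 then True else has (jISC (lhd gl)) /\ has (jISCL (ltl gl)).

Definition entry_ok (ea n E : nat) (has : nat -> Prop) : Prop :=
  let J := cfst E in let W := csnd E in let D := csnd J in
  match cfst J with
  | 1 => EVok n (cfst D) (cfst (csnd D)) (cfst (csnd (csnd D))) (csnd (csnd (csnd D))) W has
  | 2 => EVSok (cfst D) (cfst (csnd D)) (cfst (csnd (csnd D))) (csnd (csnd (csnd D))) has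
  | 3 => MUok (cfst D) (cfst (csnd D)) (cfst (csnd (csnd D))) (csnd (csnd (csnd D))) W has
  | 4 => FACTok ea (cfst D) (cfst (csnd D)) (csnd (csnd D)) W has
  | 5 => ISCok D has
  | 6 => ISCLok D has
  | _ => True
  end.

Lemma EVok_mono n j c v y W (h1 h2 : nat -> Prop) :
  (forall t, h1 t -> h2 t) -> EVok n j c v y W h1 -> EVok n j c v y W h2.
Proof.
  intros H. unfold EVok. destruct (cfst c) as [|[|[|[|[|[|[|]]]]]]]; auto.
  - intros [H1 H2]; split; auto.
  - intros [H1 H2]; split; auto. destruct (lhd v =? 0); destruct H2; split; auto.
  - intros [H1 H2]; split; auto.
  - intros [H1 [H2 H3]]; split; auto; split; auto. destruct (Nat.odd _); auto.
Qed.

Lemma entry_ok_mono ea n E (h1 h2 : nat -> Prop) :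
  (forall t, h1 t -> h2 t) -> entry_ok ea n E h1 -> entry_ok ea n E h2.
Proof.
  intros H. unfold entry_ok. cbv zeta.
  destruct (cfst (cfst E)) as [|[|[|[|[|[|[|]]]]]]]; auto.
  - apply EVok_mono; auto.
  - unfold EVSok. destruct (_ =? 0); auto. intros [H1 [H2 H3]]; auto.
  - unfold MUok. destruct (_ =? 0); auto. intros [H1 [H2 H3]]; auto.
  - unfold FACTok. destruct (_ =? 0); auto. intros [H1 H2]; auto.
  - unfold ISCok. destruct (cfst _) as [|[|[|[|[|[|[|]]]]]]]; auto; intros [H1 H2]; auto.
  - unfold ISCLok. destruct (_ =? 0); auto. intros [H1 H2]; auto.
Qed.

Lemma entry_ok_0 ea n has : entry_ok ea n 0 has.
Proof. unfold entry_ok. cbv zeta. rewrite !cfst0. exact I. Qed.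

Definition earlier (L : list nat) (i t : nat) : Prop := exists p, p < i /\ cfst (nth p L 0) = t.

Definition valid_cert (ea n : nat) (L : list nat) : Prop :=
  forall i, i < length L -> entry_ok ea n (nth i L 0) (earlier L i).

Definition stage_oracle (a : nat -> option nat) (n j : nat) : nat -> option nat :=
  match j with 0 => empty_oracle | S j' => join (stage a n j') (fin_fun (stage_arg j' n)) end.

Section Soundness.

Variables (a : nat -> option nat) (ea n : nat).
Hypothesis Ha : forall x y, a x = Some y <-> phi ea x y.

Definition EV_holds (j c v y : nat) : Prop :=
  exists C, encode C = c /\ forall l, lcode l = v -> eval (stage_oracle a n j) C l y.
Definition EVS_holds (j gl v ws : nat) : Prop :=
  exists Gs, encode_list Gs = gl /\ forall l, lcode l = v ->
    exists wl, lcode wl = ws /\ evals (stage_oracle a n j) Gs l wl.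
Definition MU_holds (j f v k : nat) : Prop :=
  forall F l, encode F = f -> lcode l = v -> forall i, i < k ->
    exists z, z <> 0 /\ eval (stage_oracle a n j) F (i :: l) z.

Definition judgment_sound (t : nat) : Prop :=
  (forall j c v y, t = jEV j c v y -> EV_holds j c v y) /\
  (forall j gl v ws, t = jEVS j gl v ws -> EVS_holds j gl v ws) /\
  (forall j f v k, t = jMU j f v k -> MU_holds j f v k) /\
  (forall j x y, t = jFACT j x y -> stage a n j x = Some y) /\
  (forall c, t = jISC c -> exists C, encode C = c) /\
  (forall gl, t = jISCL gl -> exists Gs, encode_list Gs = gl).

Variable has : nat -> Prop.
Hypothesis has_sound : forall t, has t -> judgment_sound t.

Lemma has_EV j c v y : has (jEV j c v y) -> EV_holds j c v y.
Proof. intros H. now apply (has_sound _ H). Qed.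
Lemma has_EVS j gl v ws : has (jEVS j gl v ws) -> EVS_holds j gl v ws.
Proof. intros H. now apply (has_sound _ H). Qed.
Lemma has_MU j f v k : has (jMU j f v k) -> MU_holds j f v k.
Proof. intros H. now apply (has_sound _ H). Qed.
Lemma has_FACT j x y : has (jFACT j x y) -> stage a n j x = Some y.
Proof. intros H. now apply (has_sound _ H). Qed.
Lemma has_ISC c : has (jISC c) -> exists C, encode C = c.
Proof. intros H. now apply (has_sound _ H). Qed.
Lemma has_ISCL gl : has (jISCL gl) -> exists Gs, encode_list Gs = gl.
Proof. intros H. now apply (has_sound _ H). Qed.

Lemma lhd_lcode_nth l : lhd (lcode l) = nth 0 l 0.
Proof. exact (lnth_lcode 0 l). Qed.

Lemma lcode_neq0 l : lcode l <> 0 -> exists h l0, l = h :: l0.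
Proof. destruct l; simpl; [congruence | eauto]. Qed.

Lemma EV_sound_CRec j f g v y W : EVok n j (cpair 4 (cpair f g)) v y W has ->
  EV_holds j (cpair 4 (cpair f g)) v y.
Proof.
  unfold EVok. simpcp. intros [Hv H].
  destruct (Nat.eqb_spec (lhd v) 0) as [Hz|Hz]; destruct H as [H1 H2].
  - destruct (has_EV _ _ _ _ H1) as [F [HF HF']]. destruct (has_ISC _ H2) as [G HG].
    exists (CRec F G). split; [simpl; congruence|].
    intros l <-. destruct (lcode_neq0 _ Hv) as [h [l0 ->]].
    rewrite lhd_lcode_nth in Hz. simpl in Hz. subst h.
    constructor. apply HF'. now rewrite ltl_lcode.
  - destruct (has_EV _ _ _ _ H1) as [C0 [HC0 HC0']].
    destruct (has_EV _ _ _ _ H2) as [G [HG HG']].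
    destruct (encode_CRec_inv _ _ _ HC0) as [F [G' [-> [HF HG'']]]].
    assert (G' = G) as -> by (apply encode_inj; congruence).
    exists (CRec F G). split; auto.
    intros l <-. destruct (lcode_neq0 _ Hv) as [h [l0 ->]].
    rewrite lhd_lcode_nth in Hz. destruct h as [|k]; [contradiction|].
    rewrite lhd_lcode_nth, ltl_lcode in HC0', HG'. simpl in HC0', HG'.
    eapply eRecS; [apply HC0' | apply HG']; reflexivity.
Qed.

Lemma EV_sound j c v y W : EVok n j c v y W has -> EV_holds j c v y.
Proof.
  intros H. destruct (cpair_surj c) as [ct [cd <-]].
  destruct ct as [|[|[|[|[|[|[|ct]]]]]]]; [..| |].
  all: try (destruct (cpair_surj cd) as [f [g <-]]; now apply (EV_sound_CRec _ _ _ _ _ W)).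
  all: unfold EVok in H; simpcp.
  - destruct H as [-> ->]. exists CZero. split; [reflexivity|]. intros; constructor.
  - destruct H as [-> ->]. exists CSucc. split; [reflexivity|].
    intros l <-. rewrite lhd_lcode_nth. constructor.
  - subst y. exists (CProj cd). split; [reflexivity|]. intros l <-. rewrite lnth_lcode. constructor.
  - destruct (cpair_surj cd) as [f [gl <-]]. simpcp. destruct H as [H1 H2].
    destruct (has_EVS _ _ _ _ H1) as [Gs [HG HG']].
    destruct (has_EV _ _ _ _ H2) as [F [HF HF']].
    exists (CComp F Gs). split; [rewrite encode_CComp; congruence|].
    intros l Hl. destruct (HG' l Hl) as [wl [Hw Hw']]. econstructor; eauto.
  - destruct H as [H1 H2]. destruct (has_EV _ _ _ _ H2) as [F [HF HF']].
    exists (CMu F). split; [simpl; congruence|].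
    intros l Hl. constructor.
    + apply HF'. simpl. congruence.
    + intros i Hi. eapply has_MU; eauto.
  - destruct H as [-> [Hj H]]. exists COrc. split; [reflexivity|].
    intros l <-. constructor. destruct j as [|j]; [congruence|]. simpl.
    unfold join. rewrite lhd_lcode_nth in H. destruct (Nat.odd (nth 0 l 0)).
    + now apply fin_fun_spec.
    + now apply has_FACT.
  - destruct H.
Qed.

Lemma EVS_sound j gl v ws : EVSok j gl v ws has -> EVS_holds j gl v ws.
Proof.
  unfold EVSok. destruct (Nat.eqb_spec gl 0) as [->|Hg].
  - intros ->. exists []. split; auto. intros l _. exists []. split; auto. constructor.
  - intros [Hw [H1 H2]].
    destruct (has_EV _ _ _ _ H1) as [G [HG HG']].
    destruct (has_EVS _ _ _ _ H2) as [Gs [HGs HGs']].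
    exists (G :: Gs). split.
    + simpl. rewrite HG, HGs. destruct gl; [congruence|]. unfold lhd, ltl. simpl.
      now rewrite cpair_fst_snd.
    + intros l Hl. destruct (HGs' l Hl) as [wl [Hwl Hwl']].
      exists (lhd ws :: wl). split.
      * simpl. rewrite Hwl. destruct ws; [congruence|]. unfold lhd, ltl. simpl.
        now rewrite cpair_fst_snd.
      * constructor; auto.
Qed.

Lemma MU_sound j f v k W : MUok j f v k W has -> MU_holds j f v k.
Proof.
  intros H F l HF Hl i Hi. unfold MUok in H. destruct (Nat.eqb_spec k 0) as [->|Hk]; [lia|].
  destruct H as [HW [H1 H2]].
  destruct (Nat.eq_dec i (pred k)) as [->|].
  - destruct (has_EV _ _ _ _ H2) as [F' [HF' HF'']].
    assert (F' = F) as -> by (apply encode_inj; congruence).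
    exists W. split; auto. apply HF''. simpl. congruence.
  - eapply has_MU; eauto. lia.
Qed.

Lemma FACT_sound j x y W : FACTok ea j x y W has -> stage a n j x = Some y.
Proof.
  unfold FACTok. destruct (Nat.eqb_spec j 0) as [->|Hj].
  - intros H. destruct (has_EV _ _ _ _ H) as [C [HC HC']]. apply Ha.
    exists C. split; [exact HC | now apply (HC' [x])].
  - intros [H1 H2]. destruct j as [|j]; [congruence|].
    destruct (has_EV _ _ _ _ H2) as [C [HC HC']].
    simpl. apply bapp_spec. exists W. split; [exact (has_FACT _ _ _ H1)|].
    exists C. split; [exact HC | now apply (HC' [x])].
Qed.

Lemma ISC_sound c : ISCok c has -> exists C, encode C = c.
Proof.
  intros H. destruct (cpair_surj c) as [ct [cd <-]]. unfold ISCok in H. simpcp.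
  destruct ct as [|[|[|[|[|[|[|ct]]]]]]].
  - subst. now exists CZero.
  - subst. now exists CSucc.
  - now exists (CProj cd).
  - destruct (cpair_surj cd) as [f [gl <-]]. simpcp. destruct H as [H1 H2].
    destruct (has_ISC _ H1) as [F HF], (has_ISCL _ H2) as [Gs HGs].
    exists (CComp F Gs). rewrite encode_CComp. congruence.
  - destruct (cpair_surj cd) as [f [g <-]]. simpcp. destruct H as [H1 H2].
    destruct (has_ISC _ H1) as [F HF], (has_ISC _ H2) as [G HG].
    exists (CRec F G). simpl. congruence.
  - destruct (has_ISC _ H) as [F HF]. exists (CMu F). simpl. congruence.
  - subst. now exists COrc.
  - destruct H.
Qed.

Lemma ISCL_sound gl : ISCLok gl has -> exists Gs, encode_list Gs = gl.
Proof.
  unfold ISCLok. destruct (Nat.eqb_spec gl 0) as [->|Hg]; [now exists []|].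
  intros [H1 H2]. destruct (has_ISC _ H1) as [G HG], (has_ISCL _ H2) as [Gs HGs].
  exists (G :: Gs). simpl. rewrite HG, HGs. destruct gl; [congruence|].
  unfold lhd, ltl. simpl. now rewrite cpair_fst_snd.
Qed.

Lemma entry_ok_sound E : entry_ok ea n E has -> judgment_sound (cfst E).
Proof.
  unfold entry_ok. cbv zeta. intros H.
  split; [|split; [|split; [|split; [|split]]]]; intros * HJ;
    rewrite HJ in H; unfold jEV, jEVS, jMU, jFACT, jISC, jISCL in H; simpcp.
  - eapply EV_sound; eauto.
  - eapply EVS_sound; eauto.
  - eapply MU_sound; eauto.
  - eapply FACT_sound; eauto.
  - eapply ISC_sound; eauto.
  - eapply ISCL_sound; eauto.
Qed.

End Soundness.

Lemma valid_cert_sound a ea n L : (forall x y, a x = Some y <-> phi ea x y) ->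
  (forall i, entry_ok ea n (nth i L 0) (earlier L i)) ->
  forall i, judgment_sound a n (cfst (nth i L 0)).
Proof.
  intros Ha HV i. induction i as [i IH] using (well_founded_induction lt_wf).
  apply (entry_ok_sound a ea n Ha (earlier L i)); auto.
  intros t [p [Hp <-]]. apply IH; auto.
Qed.

Definition contains (L : list nat) (t : nat) : Prop :=
  exists p, p < length L /\ cfst (nth p L 0) = t.

Definition certified (ea n J : nat) : Prop := exists L, valid_cert ea n L /\ contains L J.

Lemma valid_cert_app ea n L1 L2 :
  valid_cert ea n L1 -> valid_cert ea n L2 -> valid_cert ea n (L1 ++ L2).
Proof.
  intros H1 H2 i Hi. rewrite length_app in Hi.
  destruct (lt_dec i (length L1)).
  - rewrite app_nth1 by auto. eapply entry_ok_mono; [|apply H1; auto].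
    intros t [p [Hp Ht]]. exists p. split; auto. rewrite app_nth1 by lia. auto.
  - rewrite app_nth2 by lia. eapply entry_ok_mono; [|apply H2; lia].
    intros t [p [Hp Ht]]. exists (length L1 + p). split; [lia|]. rewrite app_nth2 by lia.
    now replace (length L1 + p - length L1) with p by lia.
Qed.

Lemma contains_app_l L1 L2 t : contains L1 t -> contains (L1 ++ L2) t.
Proof. intros [p [Hp Ht]]. exists p. rewrite length_app, app_nth1 by auto. split; auto; lia. Qed.

Lemma contains_app_r L1 L2 t : contains L2 t -> contains (L1 ++ L2) t.
Proof.
  intros [p [Hp Ht]]. exists (length L1 + p). rewrite length_app, app_nth2 by lia.
  replace (length L1 + p - length L1) with p by lia. split; auto; lia.
Qed.

Lemma valid_cert_snoc ea n L E : valid_cert ea n L -> entry_ok ea n E (contains L) ->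
  valid_cert ea n (L ++ [E]) /\ contains (L ++ [E]) (cfst E).
Proof.
  intros HV HE. split.
  - intros i Hi. rewrite length_app in Hi. simpl in Hi.
    destruct (lt_dec i (length L)).
    + rewrite app_nth1 by auto. eapply entry_ok_mono; [|apply HV; auto].
      intros t [p [Hp Ht]]. exists p. split; auto. rewrite app_nth1 by lia. auto.
    + assert (i = length L) as -> by lia. rewrite app_nth2, Nat.sub_diag by lia. simpl.
      eapply entry_ok_mono; [|exact HE]. intros t [p [Hp Ht]]. exists p. split; auto.
      rewrite app_nth1 by lia. auto.
  - exists (length L). rewrite length_app, app_nth2, Nat.sub_diag by lia. simpl. split; auto; lia.
Qed.

Lemma certified_rule2 ea n t1 t2 J W :
  certified ea n t1 -> certified ea n t2 ->
  (forall has : nat -> Prop, has t1 -> has t2 -> entry_ok ea n (cpair J W) has) ->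
  certified ea n J.
Proof.
  intros [L1 [V1 C1]] [L2 [V2 C2]] H.
  destruct (valid_cert_snoc ea n (L1 ++ L2) (cpair J W) (valid_cert_app _ _ _ _ V1 V2)
     (H _ (contains_app_l _ _ _ C1) (contains_app_r _ _ _ C2))) as [H1 H2].
  rewrite cfst_pair in H2. now exists ((L1 ++ L2) ++ [cpair J W]).
Qed.

Lemma certified_rule1 ea n t1 J W :
  certified ea n t1 -> (forall has : nat -> Prop, has t1 -> entry_ok ea n (cpair J W) has) ->
  certified ea n J.
Proof. intros C1 H. apply (certified_rule2 ea n t1 t1 J W C1 C1). auto. Qed.

Lemma certified_axiom ea n J W :
  (forall has : nat -> Prop, entry_ok ea n (cpair J W) has) -> certified ea n J.
Proof.
  intros H. destruct (valid_cert_snoc ea n [] _ (fun i Hi => ltac:(simpl in Hi; lia)) (H _))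
    as [H1 H2].
  rewrite cfst_pair in H2. now exists ([] ++ [cpair J W]).
Qed.

Lemma entry_ok_ISC ea n c W has : ISCok c has -> entry_ok ea n (cpair (jISC c) W) has.
Proof. intros H. unfold entry_ok, jISC. cbv zeta. simpcp. exact H. Qed.
Lemma entry_ok_ISCL ea n gl W has : ISCLok gl has -> entry_ok ea n (cpair (jISCL gl) W) has.
Proof. intros H. unfold entry_ok, jISCL. cbv zeta. simpcp. exact H. Qed.
Lemma entry_ok_EV ea n j c v y W has :
  EVok n j c v y W has -> entry_ok ea n (cpair (jEV j c v y) W) has.
Proof. intros H. unfold entry_ok, jEV. cbv zeta. simpcp. exact H. Qed.
Lemma entry_ok_EVS ea n j gl v ws W has :
  EVSok j gl v ws has -> entry_ok ea n (cpair (jEVS j gl v ws) W) has.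
Proof. intros H. unfold entry_ok, jEVS. cbv zeta. simpcp. exact H. Qed.
Lemma entry_ok_MU ea n j f v k W has :
  MUok j f v k W has -> entry_ok ea n (cpair (jMU j f v k) W) has.
Proof. intros H. unfold entry_ok, jMU. cbv zeta. simpcp. exact H. Qed.
Lemma entry_ok_FACT ea n j x y W has :
  FACTok ea j x y W has -> entry_ok ea n (cpair (jFACT j x y) W) has.
Proof. intros H. unfold entry_ok, jFACT. cbv zeta. simpcp. exact H. Qed.

Fixpoint code_nested_ind (P : code -> Prop) (HZ : P CZero) (HS : P CSucc)
  (HP : forall i, P (CProj i)) (HC : forall f gs, P f -> Forall P gs -> P (CComp f gs))
  (HR : forall f g, P f -> P g -> P (CRec f g)) (HM : forall f, P f -> P (CMu f)) (HO : P COrc)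
  (c : code) {struct c} : P c :=
  let IH := code_nested_ind P HZ HS HP HC HR HM HO in
  match c with
  | CZero => HZ
  | CSucc => HS
  | CProj i => HP i
  | CComp f gs => HC f gs (IH f)
      ((fix F (l : list code) : Forall P l :=
          match l with [] => Forall_nil _ | g :: l' => Forall_cons _ (IH g) (F l') end) gs)
  | CRec f g => HR f g (IH f) (IH g)
  | CMu f => HM f (IH f)
  | COrc => HO
  end.

Lemma certified_ISC ea n C : certified ea n (jISC (encode C)).
Proof.
  induction C as [| | i | f gs IHf Hgs | f g IHf IHg | f IHf | ] using code_nested_ind.
  1-3, 7: apply (certified_axiom _ _ _ 0); intros has;
    apply entry_ok_ISC; unfold ISCok; simpl encode; simpcp; auto.
  - assert (HL : certified ea n (jISCL (encode_list gs))).
    { induction Hgs as [|g gs Hg Hgs IH].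
      - apply (certified_axiom _ _ _ 0). intros has. apply entry_ok_ISCL. exact I.
      - apply (certified_rule2 _ _ _ _ _ 0 Hg IH). intros has h1 h2.
        apply entry_ok_ISCL. unfold ISCLok, lhd, ltl. simpl. simpcp. auto. }
    apply (certified_rule2 _ _ _ _ _ 0 IHf HL). intros has h1 h2.
    apply entry_ok_ISC. unfold ISCok. rewrite encode_CComp. simpcp. auto.
  - apply (certified_rule2 _ _ _ _ _ 0 IHf IHg). intros has h1 h2.
    apply entry_ok_ISC. unfold ISCok. simpl encode. simpcp. auto.
  - apply (certified_rule1 _ _ _ _ 0 IHf). intros has h1.
    apply entry_ok_ISC. unfold ISCok. simpl encode. simpcp. auto.
Qed.

Lemma certified_MU_chain ea n j f v k :
  (forall i, i < k -> exists z, z <> 0 /\ certified ea n (jEV j (encode f) (lcode (i :: v)) z)) ->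
  certified ea n (jMU j (encode f) (lcode v) k).
Proof.
  induction k as [|k IH]; intros H.
  - apply (certified_axiom _ _ _ 0). intros has. apply entry_ok_MU. exact I.
  - destruct (H k) as [z [Hz Cz]]; [lia|].
    apply (certified_rule2 _ _ _ _ _ z (IH (fun i Hi => H i ltac:(lia))) Cz).
    intros has h1 h2. apply entry_ok_MU. unfold MUok. simpl. auto.
Qed.

Definition facts_certified a ea n j : Prop :=
  forall x y, stage a n j x = Some y -> certified ea n (jFACT j x y).

Lemma certified_EV_oracle a ea n j v y :
  (forall j', j = S j' -> facts_certified a ea n j') ->
  stage_oracle a n j (nth 0 v 0) = Some y -> certified ea n (jEV j (encode COrc) (lcode v) y).
Proof.
  intros HF H. destruct j as [|j]; [discriminate|]. simpl in H. unfold join in H.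
  destruct (Nat.odd (nth 0 v 0)) eqn:Eq.
  - apply fin_fun_spec in H as [Hb1 Hb2].
    apply (certified_axiom _ _ _ 0). intros has. apply entry_ok_EV. unfold EVok.
    simpl encode. simpcp. rewrite lhd_lcode_nth, Eq. simpl pred. repeat split; auto.
  - apply (certified_rule1 _ _ _ _ 0 (HF j eq_refl _ _ H)). intros has h1.
    apply entry_ok_EV. unfold EVok. simpl encode. simpcp.
    rewrite lhd_lcode_nth, Eq. simpl pred. repeat split; auto.
Qed.

Fixpoint certified_EV a ea n j (HF : forall j', j = S j' -> facts_certified a ea n j')
  C l y (H : eval (stage_oracle a n j) C l y) {struct H} :
  certified ea n (jEV j (encode C) (lcode l) y)
with certified_EVS a ea n j (HF : forall j', j = S j' -> facts_certified a ea n j')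
  Gs l ws (H : evals (stage_oracle a n j) Gs l ws) {struct H} :
  certified ea n (jEVS j (encode_list Gs) (lcode l) (lcode ws)).
Proof.
  - destruct H as [v|v|i v|f gs v ws y Hgs Hf|f g v y Hf|f g k v z y Hr Hg|f v k Hf Hlt|v y Ho].
    1-3: apply (certified_axiom _ _ _ 0); intros has; apply entry_ok_EV; unfold EVok;
      simpl encode; simpcp; rewrite ?lhd_lcode_nth, ?lnth_lcode; auto.
    + apply (certified_rule2 _ _ _ _ _ (lcode ws)
        (certified_EVS _ _ _ _ HF _ _ _ Hgs) (certified_EV _ _ _ _ HF _ _ _ Hf)).
      intros has h1 h2. apply entry_ok_EV. unfold EVok. rewrite encode_CComp. simpcp. auto.
    + apply (certified_rule2 _ _ _ _ _ 0 (certified_EV _ _ _ _ HF _ _ _ Hf) (certified_ISC ea n g)).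
      intros has h1 h2. apply entry_ok_EV. unfold EVok. simpl encode. simpcp.
      split; [discriminate|]. rewrite lhd_lcode_nth, ltl_lcode. simpl. auto.
    + apply (certified_rule2 _ _ _ _ _ z
        (certified_EV _ _ _ _ HF _ _ _ Hr) (certified_EV _ _ _ _ HF _ _ _ Hg)).
      intros has h1 h2. apply entry_ok_EV. unfold EVok. simpl encode. simpcp.
      split; [discriminate|]. rewrite lhd_lcode_nth, ltl_lcode. simpl. auto.
    + assert (Hch : forall i, i < k ->
        exists z, z <> 0 /\ certified ea n (jEV j (encode f) (lcode (i :: v)) z)).
      { intros i Hi. destruct (Hlt i Hi) as [z [Hz Hz']].
        exists z. split; [exact Hz | exact (certified_EV _ _ _ _ HF _ _ _ Hz')]. }
      apply (certified_rule2 _ _ _ _ _ 0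
        (certified_MU_chain _ _ _ _ _ _ Hch) (certified_EV _ _ _ _ HF _ _ _ Hf)).
      intros has h1 h2. apply entry_ok_EV. unfold EVok. simpl encode. simpcp. auto.
    + exact (certified_EV_oracle _ _ _ _ _ _ HF Ho).
  - destruct H as [|g gs v w ws Hg Hgs].
    + apply (certified_axiom _ _ _ 0). intros has. apply entry_ok_EVS. exact eq_refl.
    + apply (certified_rule2 _ _ _ _ _ 0
        (certified_EV _ _ _ _ HF _ _ _ Hg) (certified_EVS _ _ _ _ HF _ _ _ Hgs)).
      intros has h1 h2. apply entry_ok_EVS. unfold EVSok, lhd, ltl. simpl. simpcp.
      split; [discriminate | auto].
Qed.

Lemma facts_certified_all a ea n : (forall x y, a x = Some y <-> phi ea x y) ->
  forall j, facts_certified a ea n j.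
Proof.
  intros Ha j. induction j as [|j IH]; intros x y H.
  - apply Ha in H as [C [HC HE]].
    apply (certified_rule1 _ _ _ _ 0
      (certified_EV a ea n 0 (fun _ E => ltac:(discriminate)) C [x] y HE)).
    intros has h1. apply entry_ok_FACT. unfold FACTok. simpl. now rewrite <- HC.
  - simpl in H. apply bapp_spec in H as [e [He [C [HC HE]]]].
    apply (certified_rule2 _ _ _ _ _ e (IH _ _ He)
      (certified_EV a ea n (S j) (fun j' E => ltac:(injection E as <-; exact IH)) C [x] y HE)).
    intros has h1 h2. apply entry_ok_FACT. unfold FACTok. simpl. rewrite HC in h2. auto.
Qed.

(** * A primitive recursive certificate checker *)

(* Environment [i; L; t]: some entry of [L] before position [i] has judgment [t]. *)
Definition hasF := BEx (Eqb (Fst (Lnth (Var 0) (Var 1))) (Var 2)) (Var 0) [Var 1; Var 2].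
Definition hasN i L t := den hasF [i; L; t].
Lemma hasN_spec i L t : hasN i L t = 0 <-> exists p, p < i /\ cfst (lnth p L) = t.
Proof.
  unfold hasN, hasF. rewrite den_BEx. cbn -[Eqb Fst Lnth].
  split; intros [p [Hp H]]; exists p; split; auto.
  - rewrite den_Eqb, den_Fst, den_Lnth in H. cbn in H.
    destruct (Nat.eqb_spec (cfst (lnth p L)) t); auto; discriminate.
  - rewrite den_Eqb, den_Fst, den_Lnth. cbn. rewrite H, Nat.eqb_refl. auto.
Qed.

(* The entry checks run in the environment [i; ea; n; L]: the position of the entry, the
   index of [a], the input [n] and the coded certificate. *)
Definition Has t := Comp hasF [Var 0; Var 3; t].
Arguments Has : simpl never.
Lemma den_Has t env : den (Has t) env = hasN (nth 0 env 0) (nth 3 env 0) (den t env).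
Proof. reflexivity. Qed.

Definition tlP := Eqb (Tb (Var 1) (Pair (Pair (Var 2) (Var 0)) (Const 1))) Zero.
Definition tlF := BAll tlP (Var 2) [Var 0; Var 1].
Definition GraphBitsBelow u z y := Comp tlF [u; z; y].
Arguments GraphBitsBelow : simpl never.
Lemma den_GraphBitsBelow u z y env : den (GraphBitsBelow u z y) env = 0 <->
  forall y', y' < den y env -> graph_bit (den u env) (den z env) y' = false.
Proof.
  unfold GraphBitsBelow, tlF. rewrite den_Comp, den_BAll. cbn -[tlP]. unfold tlP.
  split; intros H y' Hy'; specialize (H y' Hy').
  - rewrite den_Eqb, den_Tb, !den_Pair, den_Const in H. cbn in H. unfold graph_bit.
    destruct (Nat.testbit _ _); simpl in H; auto; discriminate.
  - rewrite den_Eqb, den_Tb, !den_Pair, den_Const. cbn. unfold graph_bit in H. rewrite H. auto.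
Qed.

Definition fst_iterF := Rec (Var 0) (Var 1) (Fst (Var 1)).
Definition StageArg k := Snd (Comp fst_iterF [k; Var 2]).
Arguments StageArg : simpl never.
Lemma fst_iter_nat_rec k n : fst_iter k n = nat_rec (fun _ => nat) n (fun _ z => cfst z) k.
Proof.
  revert n. induction k; intros n; auto. rewrite fst_iter_S, IHk. simpl. clear IHk.
  induction k; simpl; auto.
Qed.
Lemma den_StageArg k env : den (StageArg k) env = stage_arg (den k env) (nth 2 env 0).
Proof.
  unfold StageArg, stage_arg. rewrite den_Snd, den_Comp. f_equal. unfold fst_iterF. cbn -[Fst].
  rewrite fst_iter_nat_rec. apply nat_rec_ext. intros. rewrite den_Fst. reflexivity.
Qed.

Definition Hd w := Lnth (Const 0) w.
Definition Tl w := Snd (Pred w).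
Arguments Hd : simpl never.
Arguments Tl : simpl never.
Lemma den_Hd w env : den (Hd w) env = lhd (den w env).
Proof. unfold Hd. rewrite den_Lnth, den_Const. reflexivity. Qed.
Lemma den_Tl w env : den (Tl w) env = ltl (den w env).
Proof. unfold Tl. rewrite den_Snd, den_Pred. reflexivity. Qed.

Definition Tagged4 t a b c d := Pair (Const t) (Pair a (Pair b (Pair c d))).
Definition jEVe j c v y := Tagged4 1 j c v y.
Definition jEVSe j gl v ws := Tagged4 2 j gl v ws.
Definition jMUe j f v k := Tagged4 3 j f v k.
Definition jFACTe j x y := Pair (Const 4) (Pair j (Pair x y)).
Definition jISCe c := Pair (Const 5) c.
Definition jISCLe gl := Pair (Const 6) gl.
Lemma den_jEVe j c v y env :
  den (jEVe j c v y) env = jEV (den j env) (den c env) (den v env) (den y env).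
Proof. unfold jEVe, Tagged4. rewrite !den_Pair, den_Const. reflexivity. Qed.
Lemma den_jEVSe j c v y env :
  den (jEVSe j c v y) env = jEVS (den j env) (den c env) (den v env) (den y env).
Proof. unfold jEVSe, Tagged4. rewrite !den_Pair, den_Const. reflexivity. Qed.
Lemma den_jMUe j c v y env :
  den (jMUe j c v y) env = jMU (den j env) (den c env) (den v env) (den y env).
Proof. unfold jMUe, Tagged4. rewrite !den_Pair, den_Const. reflexivity. Qed.
Lemma den_jFACTe j x y env : den (jFACTe j x y) env = jFACT (den j env) (den x env) (den y env).
Proof. unfold jFACTe. rewrite !den_Pair, den_Const. reflexivity. Qed.
Lemma den_jISCe c env : den (jISCe c) env = jISC (den c env).
Proof. unfold jISCe. rewrite !den_Pair, den_Const. reflexivity. Qed.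
Lemma den_jISCLe c env : den (jISCLe c) env = jISCL (den c env).
Proof. unfold jISCLe. rewrite !den_Pair, den_Const. reflexivity. Qed.

Lemma if01 (b : bool) : ((if b then 0 else 1) =? 0) = b. Proof. destruct b; auto. Qed.
Lemma if10 p : ((if p =? 0 then 1 else 0) =? 0) = negb (p =? 0).
Proof. destruct (p =? 0); auto. Qed.
Lemma b2n0 b : (Nat.b2n b =? 0) = negb b. Proof. destruct b; auto. Qed.
Lemma b2n1 b : (Nat.b2n b =? 1) = b. Proof. destruct b; auto. Qed.
Ltac bcases := repeat (match goal with
  | |- context [?a =? ?b] => destruct (Nat.eqb_spec a b)
  | |- context [Nat.odd ?x] => destruct (Nat.odd x)
  | |- context [Nat.testbit ?x ?y] => destruct (Nat.testbit x y)
  end; cbn [negb]).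
Definition chkEV (j c v y W : prexp) : prexp :=
  let ct := Fst c in let cd := Snd c in
  Ifz (Eqb ct (Const 0)) (Add (Eqb cd Zero) (Eqb y Zero))
  (Ifz (Eqb ct (Const 1)) (Add (Eqb cd Zero) (Eqb y (Succ (Hd v))))
  (Ifz (Eqb ct (Const 2)) (Eqb y (Lnth cd v))
  (Ifz (Eqb ct (Const 3)) (Add (Has (jEVSe j (Snd cd) v W)) (Has (jEVe j (Fst cd) W y)))
  (Ifz (Eqb ct (Const 4)) (Add (Nz (Eqb v Zero))
      (Ifz (Eqb (Hd v) Zero) (Add (Has (jEVe j (Fst cd) (Tl v) y)) (Has (jISCe (Snd cd))))
         (Add (Has (jEVe j c (Cons (Pred (Hd v)) (Tl v)) W))
               (Has (jEVe j (Snd cd) (Cons (Pred (Hd v)) (Cons W (Tl v))) y)))))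
  (Ifz (Eqb ct (Const 5)) (Add (Has (jMUe j cd v y)) (Has (jEVe j cd (Cons y v) Zero)))
  (Ifz (Eqb ct (Const 6)) (Add (Eqb cd Zero) (Add (Nz (Eqb j Zero))
      (Ifz (Odd (Hd v)) (Has (jFACTe (Pred j) (Div2 (Hd v)) y))
         (Add (Eqb (Tb (StageArg (Pred j)) (Pair (Pair (Div2 (Hd v)) y) (Const 1))) (Const 1))
               (GraphBitsBelow (StageArg (Pred j)) (Div2 (Hd v)) y)))))
  (Const 1))))))).

Ltac dnorm := repeat (rewrite ?den_Ifz, ?den_Eqb, ?den_Const, ?den_Zero, ?den_Succ, ?den_Pred,
  ?den_Fst, ?den_Snd, ?den_Hd, ?den_Tl, ?den_Lnth, ?den_Has, ?den_jEVe, ?den_jEVSe, ?den_jMUe,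
  ?den_jFACTe, ?den_jISCe, ?den_jISCLe, ?den_Nz, ?den_Odd, ?den_Div2, ?den_Tb, ?den_Pair, ?den_Cons,
  ?den_StageArg, ?den_Var, ?den_Add).

Section EntryChecks.

Variables i ea n L : nat.
Local Notation val e := (den e [i; ea; n; L]).
Local Notation has := (fun t => hasN i L t = 0).

Lemma den_chkEV j c v y W :
  val (chkEV j c v y W) = 0 <-> EVok n (val j) (val c) (val v) (val y) (val W) has.
Proof.
  unfold chkEV. cbv zeta. dnorm.
  unfold EVok. cbn [nth].
  destruct (cfst (den c _)) as [|[|[|[|[|[|[|ct]]]]]]]; cbn [Nat.eqb].
  all: rewrite ?if01, ?if10, ?b2n0, ?b2n1.
  all: unfold graph_bit.
  all: bcases.
  all: rewrite ?Nat.add_0_l, ?Nat.eq_add_0.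
  all: try rewrite den_GraphBitsBelow; dnorm; cbn [nth]; unfold graph_bit.
  all: try (split; intros; intuition (try lia; try discriminate)).
  all: eauto.
Qed.

Definition chkEVS (j gl v ws : prexp) : prexp :=
  Ifz (Eqb gl Zero) (Eqb ws Zero)
    (Add (Nz (Eqb ws Zero))
      (Add (Has (jEVe j (Hd gl) v (Hd ws))) (Has (jEVSe j (Tl gl) v (Tl ws))))).
Lemma den_chkEVS j gl v ws :
  val (chkEVS j gl v ws) = 0 <-> EVSok (val j) (val gl) (val v) (val ws) has.
Proof.
  unfold chkEVS. dnorm. unfold EVSok. cbn [nth].
  rewrite ?if01, ?if10, ?b2n0, ?b2n1. bcases.
  all: rewrite ?Nat.add_0_l, ?Nat.eq_add_0.
  all: try (split; intros; intuition (try lia; try discriminate)).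
Qed.

Definition chkMU (j f v k W : prexp) : prexp :=
  Ifz (Eqb k Zero) Zero
    (Add (Nz (Eqb W Zero)) (Add (Has (jMUe j f v (Pred k))) (Has (jEVe j f (Cons (Pred k) v) W)))).
Lemma den_chkMU j f v k W :
  val (chkMU j f v k W) = 0 <-> MUok (val j) (val f) (val v) (val k) (val W) has.
Proof.
  unfold chkMU. dnorm. unfold MUok. cbn [nth].
  rewrite ?if01, ?if10, ?b2n0, ?b2n1. bcases.
  all: rewrite ?Nat.add_0_l, ?Nat.eq_add_0.
  all: try (split; intros; intuition (try lia; try discriminate)).
Qed.

Definition chkFACT (j x y W : prexp) : prexp :=
  Ifz (Eqb j Zero) (Has (jEVe Zero (Var 1) (Cons x Zero) y))
    (Add (Has (jFACTe (Pred j) Zero W)) (Has (jEVe j W (Cons x Zero) y))).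
Lemma den_chkFACT j x y W :
  val (chkFACT j x y W) = 0 <-> FACTok ea (val j) (val x) (val y) (val W) has.
Proof.
  unfold chkFACT. dnorm. unfold FACTok. cbn [nth].
  rewrite ?if01, ?if10, ?b2n0, ?b2n1. bcases.
  all: rewrite ?Nat.add_0_l, ?Nat.eq_add_0.
  all: try (split; intros; intuition (try lia; try discriminate)).
Qed.

Definition chkISC (c : prexp) : prexp :=
  let ct := Fst c in let cd := Snd c in
  Ifz (Eqb ct (Const 0)) (Eqb cd Zero)
  (Ifz (Eqb ct (Const 1)) (Eqb cd Zero)
  (Ifz (Eqb ct (Const 2)) Zero
  (Ifz (Eqb ct (Const 3)) (Add (Has (jISCe (Fst cd))) (Has (jISCLe (Snd cd))))
  (Ifz (Eqb ct (Const 4)) (Add (Has (jISCe (Fst cd))) (Has (jISCe (Snd cd))))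
  (Ifz (Eqb ct (Const 5)) (Has (jISCe cd))
  (Ifz (Eqb ct (Const 6)) (Eqb cd Zero) (Const 1))))))).
Lemma den_chkISC c : val (chkISC c) = 0 <-> ISCok (val c) has.
Proof.
  unfold chkISC. cbv zeta. dnorm. unfold ISCok. cbn [nth].
  destruct (cfst (den c _)) as [|[|[|[|[|[|[|ct]]]]]]]; cbn [Nat.eqb].
  all: rewrite ?if01, ?if10, ?b2n0, ?b2n1.
  all: bcases.
  all: rewrite ?Nat.add_0_l, ?Nat.eq_add_0.
  all: try (split; intros; intuition (try lia; try discriminate)).
Qed.

Definition chkISCL (gl : prexp) : prexp :=
  Ifz (Eqb gl Zero) Zero (Add (Has (jISCe (Hd gl))) (Has (jISCLe (Tl gl)))).
Lemma den_chkISCL gl : val (chkISCL gl) = 0 <-> ISCLok (val gl) has.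
Proof.
  unfold chkISCL. dnorm. unfold ISCLok. cbn [nth].
  rewrite ?if01, ?if10, ?b2n0, ?b2n1. bcases.
  all: rewrite ?Nat.add_0_l, ?Nat.eq_add_0.
  all: try (split; intros; intuition (try lia; try discriminate)).
Qed.

End EntryChecks.

Definition okE : prexp :=
  let E := Lnth (Var 0) (Var 3) in let J := Fst E in let W := Snd E in
  let tg := Fst J in let D := Snd J in
  Ifz (Eqb tg (Const 1)) (chkEV (Fst D) (Fst (Snd D)) (Fst (Snd (Snd D))) (Snd (Snd (Snd D))) W)
  (Ifz (Eqb tg (Const 2)) (chkEVS (Fst D) (Fst (Snd D)) (Fst (Snd (Snd D))) (Snd (Snd (Snd D))))
  (Ifz (Eqb tg (Const 3)) (chkMU (Fst D) (Fst (Snd D)) (Fst (Snd (Snd D))) (Snd (Snd (Snd D))) W)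
  (Ifz (Eqb tg (Const 4)) (chkFACT (Fst D) (Fst (Snd D)) (Snd (Snd D)) W)
  (Ifz (Eqb tg (Const 5)) (chkISC D)
  (Ifz (Eqb tg (Const 6)) (chkISCL D) Zero))))).

Lemma den_okE i ea n L :
  den okE [i; ea; n; L] = 0 <-> entry_ok ea n (lnth i L) (fun t => hasN i L t = 0).
Proof.
  unfold okE. cbv zeta.
  rewrite !den_Ifz, !den_Eqb, !den_Fst, !den_Lnth, !den_Const, den_Zero, !den_Var. cbn [nth].
  unfold entry_ok. cbv zeta.
  destruct (cfst (cfst (lnth i L))) as [|[|[|[|[|[|[|tg]]]]]]]; cbn [Nat.eqb]; rewrite ?if01.
  all: try reflexivity.
  all: try (split; auto; fail).
  - rewrite den_chkEV. dnorm. cbn [nth]. reflexivity.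
  - rewrite den_chkEVS. dnorm. cbn [nth]. reflexivity.
  - rewrite den_chkMU. dnorm. cbn [nth]. reflexivity.
  - rewrite den_chkFACT. dnorm. cbn [nth]. reflexivity.
  - rewrite den_chkISC. dnorm. cbn [nth]. reflexivity.
  - rewrite den_chkISCL. dnorm. cbn [nth]. reflexivity.
Qed.


Lemma den_fst_iterF k w : den fst_iterF [k; w] = fst_iter k w.
Proof.
  unfold fst_iterF. rewrite fst_iter_nat_rec. cbn -[Fst].
  apply nat_rec_ext. intros. now rewrite den_Fst.
Qed.

Definition evP := Eqb (Tb (Snd (Comp fst_iterF [Var 0; Var 1])) Zero) Zero.
(* [topE] runs in the environment [cert; ea; n] with [cert = <K, <X, <Y, L>>>]. *)
Definition tK := Fst (Var 0).
Definition tX := Fst (Snd (Var 0)).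
Definition tY := Fst (Snd (Snd (Var 0))).
Definition tL := Snd (Snd (Snd (Var 0))).
Definition topE : prexp :=
  Add (Eqb (Comp fst_iterF [tK; Var 2]) (Pair (Pair tX tY) (Const 1)))
  (Add (BAll evP tK [Var 2])
  (Add (BAll okE tL [Var 1; Var 2; tL])
        (Comp hasF [tL; tL; jFACTe tK tX tY]))).

Definition cert_ok (ea n cert : nat) : Prop :=
  let K := cfst cert in let X := cfst (csnd cert) in let Y := cfst (csnd (csnd cert)) in
  let Lc := csnd (csnd (csnd cert)) in
  fst_iter K n = cpair (cpair X Y) 1 /\
  (forall j, j < K -> Nat.testbit (stage_arg j n) 0 = false) /\
  (forall i, i < Lc -> entry_ok ea n (lnth i Lc) (fun t => hasN i Lc t = 0)) /\
  hasN Lc Lc (jFACT K X Y) = 0.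

Lemma den_topE cert ea n : den topE [cert; ea; n] = 0 <-> cert_ok ea n cert.
Proof.
  unfold cert_ok. set (K := cfst cert). set (X := cfst (csnd cert)).
  set (Y := cfst (csnd (csnd cert))). set (Lc := csnd (csnd (csnd cert))).
  unfold topE. rewrite !den_Add, !Nat.eq_add_0.
  rewrite den_Eqb, den_BAll, den_BAll, den_Comp. cbn [map].
  rewrite den_Comp. cbn [map]. rewrite den_fst_iterF.
  unfold tK, tX, tY, tL. dnorm. cbn [nth]. fold K X Y Lc.
  fold (hasN Lc Lc (jFACT K X Y)).
  destruct (Nat.eqb_spec (fst_iter K n) (cpair (cpair X Y) 1)).
  2: { split; [intros [H _]; discriminate| intros [H _]; congruence]. }
  assert (HE : forall j, j < K -> (den evP [j; n] = 0 <-> Nat.testbit (stage_arg j n) 0 = false)).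
  { intros j Hj. unfold evP. rewrite den_Eqb, den_Tb, den_Snd, den_Comp. cbn [map].
    dnorm. cbn [nth]. rewrite den_fst_iterF. unfold stage_arg.
    destruct (Nat.testbit _ _); simpl; split; congruence. }
  split.
  - intros [_ [H1 [H2 H3]]]. split; auto. split; [|split; auto].
    + intros j Hj. apply HE; auto.
    + intros i Hi. apply den_okE. auto.
  - intros [_ [H1 [H2 H3]]]. split; auto. split; [|split; auto].
    + intros j Hj. apply HE; auto.
    + intros i Hi. apply den_okE. auto.
Qed.



Lemma least_witness (P : nat -> Prop) m : P m -> exists k, P k /\ forall j, j < k -> ~ P j.
Proof.
  induction m as [m IH] using (well_founded_induction lt_wf). intros Hm.
  destruct (classic (exists j, j < m /\ P j)) as [[j [Hj Pj]]|Hn].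
  - exact (IH j Hj Pj).
  - exists m. split; auto. intros j Hj Pj. apply Hn; eauto.
Qed.

Lemma eval_CMu_inv O f v k : eval O (CMu f) v k -> eval O f (k :: v) 0.
Proof. intros H. now inversion H. Qed.

Lemma ce_of_pr_witness (chk : prexp) (P : nat -> Prop) :
  (forall n, P n <-> exists w, den chk [w; n] = 0) -> ce P.
Proof.
  intros HP. exists (encode (CMu (compile chk 2))). intros n. rewrite HP. split.
  - intros [w Hw].
    destruct (least_witness (fun w => den chk [w; n] = 0) w Hw) as [k [Hk Hmin]].
    exists k, (CMu (compile chk 2)). split; [reflexivity|]. apply eMu.
    + pose proof (compile_correct empty_oracle chk [k; n]) as E. rewrite Hk in E. exact E.
    + intros j Hj. exists (den chk [j; n]). split; [auto | apply (compile_correct _ chk [j; n])].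
  - intros [k [C [HC HE]]]. apply encode_inj in HC as ->. exists k.
    apply eval_CMu_inv in HE.
    exact (eval_functional _ _ _ _ (compile_correct _ chk [k; n]) _ HE).
Qed.

Lemma cert_ok_complete a ea n : (forall x y, a x = Some y <-> phi ea x y) ->
  Erep a n -> exists cert, cert_ok ea n cert.
Proof.
  intros Ha HM. apply Erep_iff_stage in HM as [k [x [y [H1 [H2 H3]]]]].
  destruct (facts_certified_all a ea n Ha k x y H3) as [L [V [p [Hp Hc]]]].
  exists (cpair k (cpair x (cpair y (lcode L)))).
  unfold cert_ok. simpcp. split; [exact H1 | split; [exact H2 | split]].
  - intros i Hi. destruct (lt_dec i (length L)).
    + rewrite lnth_lcode. eapply entry_ok_mono; [|apply V; auto]. intros t [q [Hq Ht]].
      apply hasN_spec. exists q. split; auto. now rewrite lnth_lcode.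
    + rewrite lnth_lcode, nth_overflow by lia. apply entry_ok_0.
  - apply hasN_spec. exists p. split.
    + pose proof (lcode_ge_length L). lia.
    + now rewrite lnth_lcode.
Qed.

Lemma cert_ok_sound a ea n cert : (forall x y, a x = Some y <-> phi ea x y) ->
  cert_ok ea n cert -> Erep a n.
Proof.
  intros Ha. unfold cert_ok. destruct (lcode_surj (csnd (csnd (csnd cert)))) as [L <-].
  intros [H1 [H2 [H3 H4]]].
  assert (HV : forall i, entry_ok ea n (nth i L 0) (earlier L i)).
  { intros i. destruct (lt_dec i (length L)).
    - assert (Hi : i < lcode L) by (pose proof (lcode_ge_length L); lia).
      specialize (H3 i Hi). rewrite lnth_lcode in H3. eapply entry_ok_mono; [|exact H3].
      intros t Ht. cbv beta in Ht. apply hasN_spec in Ht as [p [Hp Ht]].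
      exists p. split; [exact Hp|]. now rewrite lnth_lcode in Ht.
    - rewrite nth_overflow by lia. apply entry_ok_0. }
  apply hasN_spec in H4 as [p [Hp Hc]]. rewrite lnth_lcode in Hc.
  pose proof (valid_cert_sound a ea n L Ha HV p) as HS. rewrite Hc in HS.
  apply Erep_iff_stage. do 3 eexists. split; [exact H1 | split; [exact H2|]].
  destruct HS as [_ [_ [_ [HF _]]]]. now apply HF.
Qed.

Lemma Erep_ce a : partial_computable a -> ce (Erep a).
Proof.
  intros [ea Ha]. apply (ce_of_pr_witness (Comp topE [Var 0; Const ea; Var 1])).
  intros n.
  assert (E : forall w, den (Comp topE [Var 0; Const ea; Var 1]) [w; n] = den topE [w; ea; n]).
  { intros w. rewrite den_Comp. cbn [map]. now rewrite den_Const. }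
  setoid_rewrite E. setoid_rewrite den_topE. split.
  - apply (cert_ok_complete _ _ _ Ha).
  - intros [cert Hc]. exact (cert_ok_sound _ _ _ _ Ha Hc).
Qed.

Definition Beff_to_E (a : Beff) : Ecarrier :=
  exist _ (Erep (proj1_sig a)) (Erep_ce _ (proj2_sig a)).

Lemma Beff_E_embedding : embedding Beff_app E_app Beff_to_E.
Proof.
  split.
  - intros [a Ha] [a' Ha'] H. apply (f_equal (@proj1_sig _ _)) in H. simpl in H.
    assert (a = a') as <- by (apply Erep_inj; intros n; now rewrite H).
    f_equal. apply proof_irrelevance.
  - intros [a Ha] [b Hb] [c Hc] Happ. unfold Beff_app in Happ. simpl in Happ.
    assert (c = bapp a b) as ->.
    { apply functional_extensionality. intro z.
      destruct (c z) as [y|] eqn:E1, (bapp a b z) as [y'|] eqn:E2; auto.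
      - apply Happ in E1. apply bapp_spec in E2. f_equal. eapply Bapp_functional; eauto.
      - apply Happ, bapp_spec in E1. congruence.
      - apply bapp_spec, Happ in E2. congruence. }
    intros n. apply Erep_E_app.
Qed.

Theorem corollary7p5 :
  exists (f : K1 -> K2eff) (g : K2eff -> Beff) (h : Beff -> Ecarrier),
    embedding K1_app K2eff_app f /\
    embedding K2eff_app Beff_app g /\
    embedding Beff_app E_app h.
Proof.
  exists K1_to_K2eff, K2eff_to_Beff, Beff_to_E.
  split; [|split].
  - exact K1_K2eff_embedding.
  - exact K2eff_Beff_embedding.
  - exact Beff_E_embedding.
Qed.
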